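(* Let $n=1$ and assume $\delta_1\in[1/2,1)$. Then there is $\lambda>0$ such that \[ \int_0^1\!dx_1\int_{[-1,1]^m}\!dx_2\,\Gamma_\delta(\varphi)(x_1,x_2)\ \ge\ \lambda\int_0^1\!dx_1\int_{[-1,1]^m}\!dx_2\,\big(\varphi(x_1,x_2)-\langle\varphi\rangle\big)^2 \] for all $\varphi\in C_c^1(\mathbb R^{1+m})$, where $\langle\varphi\rangle$ is the average of $\varphi$ over $[0,1]\times[-1,1]^m$.
   Context: Let $m\ge1$, $x=(x_1,x_2)\in\mathbb R\times\mathbb R^m$, $|\cdot|$ Euclidean norms. For $a\ge0$, $a^{(\alpha,\alpha')}=a^\alpha$ if $a\le1$ and $a^{\alpha'}$ if $a\ge1$. Fix $\delta_1,\delta_1'\in[0,1)$, $\delta_2,\delta_2'\ge0$; $\Gamma_\delta(\varphi)(x)=|x_1|^{(2\delta_1,2\delta_1')}|\partial_{x_1}\varphi(x)|^2+|x_1|^{(2\delta_2,2\delta_2')}|\nabla_{x_2}\varphi(x)|^2$. *)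

From Stdlib Require Import Reals Lra ClassicalEpsilon.
Open Scope R_scope.

(* Points of R^{1+m} are encoded as x : nat -> R, where x 0 = x_1 and
   x 1, ..., x m are the coordinates of x_2 in R^m.  Functions on R^{1+m}
   are functions (nat -> R) -> R that only depend on coordinates 0..m. *)

Definition upd (x : nat -> R) (i : nat) (t : R) : nat -> R :=
  fun j => if Nat.eqb j i then t else x j.

Definition depends_only_on (m : nat) (phi : (nat -> R) -> R) : Prop :=
  forall x y : nat -> R, (forall i, (i <= m)%nat -> x i = y i) -> phi x = phi y.

(* Continuity on R^{1+m} (sup-norm balls, equivalent to Euclidean ones). *)
Definition cont_at (m : nat) (g : (nat -> R) -> R) (x : nat -> R) : Prop :=
  forall eps, eps > 0 -> exists delta, delta > 0 /\
    forall y, (forall i, (i <= m)%nat -> Rabs (y i - x i) < delta) ->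
      Rabs (g y - g x) < eps.

(* i-th partial derivative (a total function; equals the true partial
   derivative whenever it exists, by uniqueness of limits). *)
Definition partial (phi : (nat -> R) -> R) (i : nat) (x : nat -> R) : R :=
  epsilon (inhabits 0)
    (fun l => derivable_pt_lim (fun t => phi (upd x i t)) (x i) l).

Definition C1 (m : nat) (phi : (nat -> R) -> R) : Prop :=
  depends_only_on m phi /\
  (forall i x, (i <= m)%nat ->
     derivable_pt_lim (fun t => phi (upd x i t)) (x i) (partial phi i x)) /\
  (forall i x, (i <= m)%nat -> cont_at m (partial phi i) x).

Definition compact_support (m : nat) (phi : (nat -> R) -> R) : Prop :=
  exists Rad, forall x, (exists i, (i <= m)%nat /\ Rabs (x i) > Rad) -> phi x = 0.

Definition C1c (m : nat) (phi : (nat -> R) -> R) : Prop :=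
  C1 m phi /\ compact_support m phi.

(* a^alpha for a >= 0, with 0^alpha = 0 for alpha > 0 and 0^0 = 1. *)
Definition rpow (a alpha : R) : R :=
  if Req_EM_T a 0 then (if Req_EM_T alpha 0 then 1 else 0) else Rpower a alpha.

Definition pow2 (a alpha alpha' : R) : R :=
  if Rle_dec a 1 then rpow a alpha else rpow a alpha'.

Fixpoint sum_1_to (m : nat) (g : nat -> R) : R :=
  match m with
  | O => 0
  | S k => sum_1_to k g + g (S k)
  end.

Definition Gamma (m : nat) (d1 d1' d2 d2' : R) (phi : (nat -> R) -> R)
  (x : nat -> R) : R :=
  pow2 (Rabs (x 0%nat)) (2 * d1) (2 * d1') * (partial phi 0 x) ^ 2
  + pow2 (Rabs (x 0%nat)) (2 * d2) (2 * d2')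
      * sum_1_to m (fun i => (partial phi i x) ^ 2).

(* Riemann integral over [a,b] as a total function (value of the
   Riemann integral when f is Riemann integrable on [a,b]). *)
Definition Rint (f : R -> R) (a b : R) : R :=
  epsilon (inhabits 0)
    (fun l => exists pr : Riemann_integrable f a b, RiemannInt pr = l).

Fixpoint cube_int (k : nat) (F : (nat -> R) -> R) (x : nat -> R) : R :=
  match k with
  | O => F x
  | S k' => Rint (fun t => cube_int k' F (upd x (S k') t)) (-1) 1
  end.

(* \int_0^1 dx_1 \int_{[-1,1]^m} dx_2 F(x_1,x_2)  (iterated; by Fubini equal
   to the Lebesgue integral for the continuous integrands considered). *)
Definition box_int (m : nat) (F : (nat -> R) -> R) : R :=
  Rint (fun t => cube_int m F (upd (fun _ => 0) 0 t)) 0 1.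

Definition avg (m : nat) (phi : (nat -> R) -> R) : R :=
  box_int m phi / 2 ^ m.

From Pilot Require Import Defs.
From Stdlib Require Import Reals Lra Lia ClassicalEpsilon FunctionalExtensionality Classical List.
From Coquelicot Require Import Coquelicot.
(* Coquelicot also defines [C1]: re-import the statement's definitions so they take precedence. *)
From Pilot Require Import Defs.
Open Scope R_scope.

(** Since the mean minimizes the mean-square deviation, it suffices to bound
    int_B (phi - c)^2 by K int_B Gamma(phi) for ONE constant c.  We take for c
    the mean of the trace a = phi(1, .) on the face {x_1 = 1} and split
    phi - c = w + (a - c) with w = phi - a:
    - Hardy step: W(s) = int_cube w(s,.)^2 vanishes at s = 1; integrating
      (s W(s))' gives int_0^1 W <= 4 int_0^1 s^2 int_cube (d_1 phi)^2, and
      s^2 <= s^(2 delta_1) on [0,1] because delta_1 <= 1.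
    - Trace step: on every slice, the Poincare inequality on the cube
      [-1,1]^m (constant 32 * 2^m, proved by induction on the dimension from
      the one-dimensional one) bounds int_cube (a - c)^2 by 6 W(s) plus the
      tangential energy; averaging over s in [1/2,1], where s^(2 delta_2) is
      bounded below, brings in the weight. *)

Lemma upd_eq x j t : upd x j t j = t.
Proof. unfold upd; now rewrite Nat.eqb_refl. Qed.

Lemma upd_neq x j t i : i <> j -> upd x j t i = x i.
Proof. intros H; unfold upd; destruct (Nat.eqb_spec i j); congruence. Qed.

Lemma upd_same x j : upd x j (x j) = x.
Proof.
  apply functional_extensionality; intro i; unfold upd.
  destruct (Nat.eqb_spec i j); congruence.
Qed.

Lemma upd_upd x j a b : upd (upd x j a) j b = upd x j b.
Proof.
  apply functional_extensionality; intro i; unfold upd.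
  destruct (Nat.eqb_spec i j); congruence.
Qed.

Lemma upd_comm x i j a b : i <> j -> upd (upd x i a) j b = upd (upd x j b) i a.
Proof.
  intros H; apply functional_extensionality; intro k; unfold upd.
  destruct (Nat.eqb_spec k j); destruct (Nat.eqb_spec k i); congruence.
Qed.

Lemma Rint_RInt (f : R -> R) a b : ex_RInt f a b -> Rint f a b = RInt f a b.
Proof.
  intros H. unfold Rint.
  assert (HP : exists l, (fun l => exists pr : Riemann_integrable f a b, RiemannInt pr = l) l).
  { exists (RInt f a b). exists (ex_RInt_Reals_0 f a b H). now rewrite <- RInt_Reals. }
  destruct (epsilon_spec (inhabits 0) _ HP) as [pr Hpr].
  rewrite <- Hpr. now rewrite <- RInt_Reals.
Qed.

Definition cont_R (f : R -> R) : Prop := forall x, continuous f x.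

Lemma cont_R_of_pt (f : R -> R) : (forall x, continuity_pt f x) -> cont_R f.
Proof. intros H x; apply continuity_pt_filterlim; apply H. Qed.

Lemma cont_R_pt (f : R -> R) : cont_R f -> forall x, continuity_pt f x.
Proof. intros H x; apply continuity_pt_filterlim; apply H. Qed.

Lemma cont_R_eps (f : R -> R) x :
  (forall eps, eps > 0 -> exists d, d > 0 /\
     forall y, Rabs (y - x) < d -> Rabs (f y - f x) < eps) ->
  continuous f x.
Proof.
  intros H. apply continuity_pt_filterlim. intros eps Heps.
  destruct (H eps Heps) as [d [Hd Hy]].
  exists d; split; [lra|]. intros y [_ Hy2]. now apply Hy.
Qed.

Lemma cont_R_const c : cont_R (fun _ => c).
Proof. apply cont_R_of_pt; intro x; apply continuity_pt_const; intros a b; auto. Qed.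

Lemma cont_R_id : cont_R (fun t => t).
Proof. apply cont_R_of_pt; intro x; apply continuity_pt_id. Qed.

Lemma cont_R_plus f g : cont_R f -> cont_R g -> cont_R (fun t => f t + g t).
Proof. intros Hf Hg; apply cont_R_of_pt; intro x; apply continuity_pt_plus; apply cont_R_pt; auto. Qed.

Lemma cont_R_minus f g : cont_R f -> cont_R g -> cont_R (fun t => f t - g t).
Proof. intros Hf Hg; apply cont_R_of_pt; intro x; apply continuity_pt_minus; apply cont_R_pt; auto. Qed.

Lemma cont_R_mult f g : cont_R f -> cont_R g -> cont_R (fun t => f t * g t).
Proof. intros Hf Hg; apply cont_R_of_pt; intro x; apply continuity_pt_mult; apply cont_R_pt; auto. Qed.

Lemma cont_R_ext f g : cont_R f -> (forall x, f x = g x) -> cont_R g.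
Proof. intros Hf E. replace g with f; auto. apply functional_extensionality; auto. Qed.

Lemma cont_R_sq f : cont_R f -> cont_R (fun t => f t ^ 2).
Proof. intros Hf. apply cont_R_ext with (fun t => f t * f t); [apply cont_R_mult; auto | intro; ring]. Qed.

Lemma cont_R_scal c f : cont_R f -> cont_R (fun t => c * f t).
Proof. intros Hf; apply cont_R_mult; auto using cont_R_const. Qed.

Lemma cont_R_lin f g a b : cont_R f -> cont_R g -> cont_R (fun t => a * f t + b * g t).
Proof. intros; apply cont_R_plus; apply cont_R_scal; auto. Qed.

Lemma cont_R_of_derive (g g' : R -> R) : (forall t, is_derive g t (g' t)) -> cont_R g.
Proof. intros H x. apply (ex_derive_continuous (V:=R_NormedModule)). exists (g' x); auto. Qed.

Lemma ex_RInt_cont_R (f : R -> R) a b : cont_R f -> ex_RInt f a b.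
Proof. intros Hf; apply (ex_RInt_continuous (V:=R_CompleteNormedModule)); auto. Qed.

(** The integral of a real function, as a real number (Coquelicot's [RInt]
    at the module R, so that [ring] and [lra] see through it). *)
Definition integral (f : R -> R) (a b : R) : R := RInt f a b.

Lemma integral_lin (f g : R -> R) a b c1 c2 : cont_R f -> cont_R g ->
  integral (fun t => c1 * f t + c2 * g t) a b = c1 * integral f a b + c2 * integral g a b.
Proof.
  intros Hf Hg. apply is_RInt_unique.
  exact (is_RInt_plus (fun t => scal c1 (f t)) (fun t => scal c2 (g t)) a b _ _
     (is_RInt_scal _ _ _ c1 _ (RInt_correct f a b (ex_RInt_cont_R f a b Hf)))
     (is_RInt_scal _ _ _ c2 _ (RInt_correct g a b (ex_RInt_cont_R g a b Hg)))).
Qed.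

Lemma integral_const a b c : integral (fun _ => c) a b = (b - a) * c.
Proof. unfold integral; rewrite RInt_const. reflexivity. Qed.

Lemma integral_ext (f g : R -> R) a b : (forall x, f x = g x) -> integral f a b = integral g a b.
Proof. intros H; unfold integral; apply RInt_ext; intros; apply H. Qed.

Lemma integral_le (f g : R -> R) a b : a <= b -> cont_R f -> cont_R g ->
  (forall x, a <= x <= b -> f x <= g x) -> integral f a b <= integral g a b.
Proof. intros; unfold integral; apply RInt_le; auto using ex_RInt_cont_R. intros; apply H2; lra. Qed.

Lemma integral_ge0 (f : R -> R) a b : a <= b -> cont_R f ->
  (forall x, a <= x <= b -> 0 <= f x) -> 0 <= integral f a b.
Proof. intros; unfold integral; apply RInt_ge_0; auto using ex_RInt_cont_R. intros; apply H1; lra. Qed.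

Lemma integral_chasles (f : R -> R) a b c : cont_R f ->
  integral f a b + integral f b c = integral f a c.
Proof. intros Hf; exact (RInt_Chasles f a b c (ex_RInt_cont_R f a b Hf) (ex_RInt_cont_R f b c Hf)). Qed.

Lemma FTC_R (F F' : R -> R) a b : (forall x, is_derive F x (F' x)) -> cont_R F' ->
  integral F' a b = F b - F a.
Proof.
  intros H1 H2. apply is_RInt_unique.
  exact (is_RInt_derive F F' a b (fun x _ => H1 x) (fun x _ => H2 x)).
Qed.

Lemma is_derive_mult_R (f g : R -> R) x df dg : is_derive f x df -> is_derive g x dg ->
  is_derive (fun t => f t * g t) x (df * g x + f x * dg).
Proof. rewrite !is_derive_Reals; intros; apply derivable_pt_lim_mult; auto. Qed.

Lemma is_derive_minus_R (f g : R -> R) x df dg : is_derive f x df -> is_derive g x dg ->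
  is_derive (fun t => f t - g t) x (df - dg).
Proof. rewrite !is_derive_Reals; intros; apply derivable_pt_lim_minus; auto. Qed.

Lemma is_derive_const_R c x : is_derive (fun _ => c) x 0.
Proof. rewrite is_derive_Reals; apply derivable_pt_lim_const. Qed.

Lemma is_derive_id_R x : is_derive (fun t => t) x 1.
Proof. rewrite is_derive_Reals; apply derivable_pt_lim_id. Qed.

Lemma is_derive_eq (f : R -> R) (x d d' : R) : is_derive f x d -> d = d' -> is_derive f x d'.
Proof. intros; subst; auto. Qed.

Lemma integral_sq_dev (h : R -> R) a b c : a <= b -> cont_R h ->
  integral (fun t => (h t - c) ^ 2) a b
  = integral (fun t => h t ^ 2) a b - 2 * c * integral h a b + (b - a) * c ^ 2.
Proof.
  intros Hab Hh.
  assert (Hs : cont_R (fun t => h t ^ 2)) by (apply cont_R_sq; auto).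
  transitivity (integral (fun t => 1 * (1 * h t ^ 2 + (- 2 * c) * h t) + c ^ 2 * 1) a b).
  { apply integral_ext; intros; ring. }
  rewrite (integral_lin (fun t => 1 * h t ^ 2 + (- 2 * c) * h t) (fun _ => 1))
    by auto using cont_R_lin, cont_R_const.
  rewrite integral_lin by auto.
  rewrite integral_const. ring.
Qed.

Lemma mean_minimizes (h : R -> R) a b c : a < b -> cont_R h ->
  integral (fun t => (h t - integral h a b / (b - a)) ^ 2) a b <= integral (fun t => (h t - c) ^ 2) a b.
Proof.
  intros Hab Hh. rewrite !integral_sq_dev by (auto; lra).
  set (I := integral h a b).
  assert (E : (b - a) * (c - I / (b - a)) ^ 2
     = (- 2 * c * I + (b - a) * c ^ 2) - (- 2 * (I / (b - a)) * I + (b - a) * (I / (b - a)) ^ 2))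
    by (field; lra).
  assert (0 <= (b - a) * (c - I / (b - a)) ^ 2) by (apply Rmult_le_pos; [lra | apply pow2_ge_0]).
  lra.
Qed.

Lemma integral_sq_le (h : R -> R) a b : a < b -> cont_R h ->
  (integral h a b) ^ 2 <= (b - a) * integral (fun t => h t ^ 2) a b.
Proof.
  intros Hab Hh.
  assert (H0 : 0 <= integral (fun t => (h t - integral h a b / (b - a)) ^ 2) a b).
  { apply integral_ge0; [lra | | intros; apply pow2_ge_0].
    apply cont_R_sq, cont_R_minus; auto using cont_R_const. }
  rewrite integral_sq_dev in H0 by (auto; lra).
  set (I := integral h a b) in *. set (J := integral (fun t => h t ^ 2) a b) in *.
  assert (E : (b - a) * J - I ^ 2
     = (b - a) * (J - 2 * (I / (b - a)) * I + (b - a) * (I / (b - a)) ^ 2)) by (field; lra).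
  assert (0 <= (b - a) * (J - 2 * (I / (b - a)) * I + (b - a) * (I / (b - a)) ^ 2))
    by (apply Rmult_le_pos; lra).
  lra.
Qed.

(** Poincaré inequality on [-1,1] (constant 16): with w = g - g(-1), the
    identity int (t-1) (w^2)' = - int w^2 and Young's inequality give
    int w^2 <= 16 int g'^2, and the mean is the best constant. *)
Lemma poincare_interval (g g' : R -> R) : (forall t, is_derive g t (g' t)) -> cont_R g' ->
  integral (fun t => (g t - integral g (-1) 1 / 2) ^ 2) (-1) 1 <= 16 * integral (fun t => g' t ^ 2) (-1) 1.
Proof.
  intros Hd Hc. assert (Hg : cont_R g) by (eapply cont_R_of_derive; eauto).
  set (w := fun t => g t - g (-1)).
  assert (Hw : cont_R w) by (apply cont_R_minus; auto using cont_R_const).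
  set (q := fun t => (t - 1) * 2 * w t * g' t).
  assert (Hq : cont_R q).
  { unfold q. repeat apply cont_R_mult; auto using cont_R_const.
    apply cont_R_minus; auto using cont_R_id, cont_R_const. }
  assert (Hw2 : cont_R (fun t => w t ^ 2)) by (apply cont_R_sq; auto).
  assert (Hg2 : cont_R (fun t => g' t ^ 2)) by (apply cont_R_sq; auto).
  assert (Hparts : integral (fun t => 1 * w t ^ 2 + 1 * q t) (-1) 1 = 0).
  { rewrite (FTC_R (fun t => (t - 1) * (w t * w t))).
    - unfold w. ring.
    - intro x. eapply is_derive_eq.
      + apply is_derive_mult_R; [apply is_derive_minus_R; [apply is_derive_id_R | apply is_derive_const_R]|].
        apply is_derive_mult_R; unfold w; (apply is_derive_minus_R; [apply Hd | apply is_derive_const_R]).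
      + unfold q; ring.
    - apply cont_R_lin; auto. }
  rewrite integral_lin in Hparts by auto.
  assert (Hyoung : integral (fun t => -1 * q t + 0 * q t) (-1) 1
                   <= integral (fun t => / 2 * w t ^ 2 + 8 * g' t ^ 2) (-1) 1).
  { apply integral_le; try lra; try (apply cont_R_lin; auto).
    intros t Ht. unfold q. assert ((t - 1) ^ 2 <= 4) by nra.
    pose proof (pow2_ge_0 (w t + 2 * (t - 1) * g' t)). pose proof (pow2_ge_0 (g' t)). nra. }
  rewrite !integral_lin in Hyoung by auto.
  assert (Hmean : integral (fun t => (g t - integral g (-1) 1 / 2) ^ 2) (-1) 1
                  <= integral (fun t => w t ^ 2) (-1) 1).
  { eapply Rle_trans; [apply Req_le, integral_ext | exact (mean_minimizes g (-1) 1 (g (-1)) ltac:(lra) Hg)].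
    intro t; cbv beta; field. }
  lra.
Qed.

(** Hardy-type inequality on [0,1]: if W(1) = 0 and -s W'(s) <= W(s)/2 + 2 Z(s),
    then integrating (s W(s))' gives int_0^1 W <= 4 int_0^1 Z. *)
Lemma hardy_unit_interval (W W' Z : R -> R) :
  (forall s, is_derive W s (W' s)) -> cont_R W' -> cont_R Z -> W 1 = 0 ->
  (forall s, 0 <= s <= 1 -> - (s * W' s) <= W s / 2 + 2 * Z s) ->
  integral W 0 1 <= 4 * integral Z 0 1.
Proof.
  intros Hd Hc HZ H1 Hp. assert (HW : cont_R W) by (eapply cont_R_of_derive; eauto).
  assert (Hq : cont_R (fun s => s * W' s)) by (apply cont_R_mult; auto using cont_R_id).
  assert (Hparts : integral (fun s => 1 * W s + 1 * (s * W' s)) 0 1 = 1 * W 1 - 0 * W 0).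
  { apply (FTC_R (fun s => s * W s)); [|apply cont_R_lin; auto].
    intro x. eapply is_derive_eq; [apply is_derive_mult_R; [apply is_derive_id_R | apply Hd]|].
    cbv beta; ring. }
  rewrite integral_lin in Hparts by auto.
  assert (Hle : integral (fun s => -1 * (s * W' s) + 0 * W s) 0 1
                <= integral (fun s => / 2 * W s + 2 * Z s) 0 1).
  { apply integral_le; try lra; try (apply cont_R_lin; auto).
    intros t Ht. specialize (Hp t ltac:(lra)). lra. }
  rewrite !integral_lin in Hle by auto.
  lra.
Qed.

Implicit Types (F G phi : (nat -> R) -> R) (x y : nat -> R) (m k j i : nat).

(** This class is stable under the
    algebraic operations and under iterated integration, and every
    integrand of the statement belongs to it. *)

Definition sup_close m (d : R) x y : Prop := forall i, (i <= m)%nat -> Rabs (x i - y i) < d.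

Definition unif_cont m F : Prop := forall eps, eps > 0 -> exists d, d > 0 /\
  forall x y, sup_close m d x y -> Rabs (F x - F y) < eps.

Definition bounded_fun F : Prop := exists B, forall x, Rabs (F x) <= B.

Definition BUC m F : Prop := bounded_fun F /\ unif_cont m F.

Lemma sup_close_weaken m d d' x y : d' <= d -> sup_close m d' x y -> sup_close m d x y.
Proof. intros Hd H i Hi. specialize (H i Hi). lra. Qed.

Lemma sup_close_upd m d x y j c : d > 0 -> sup_close m d x y -> sup_close m d (upd x j c) (upd y j c).
Proof.
  intros Hd H i Hi. unfold upd. destruct (Nat.eqb i j); auto.
  rewrite Rminus_diag, Rabs_R0; lra.
Qed.

Lemma bound_nonneg F B : (forall x, Rabs (F x) <= B) -> 0 <= B.
Proof. intros H. specialize (H (fun _ => 0)). pose proof (Rabs_pos (F (fun _ => 0))). lra. Qed.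

Lemma BUC_ext m F G : BUC m F -> (forall y, F y = G y) -> BUC m G.
Proof. intros H E. replace G with F; auto. apply functional_extensionality; auto. Qed.

Lemma BUC_const m c : BUC m (fun _ => c).
Proof.
  split; [exists (Rabs c); intros; lra|].
  intros e He; exists 1; split; [lra|]; intros.
  rewrite Rminus_diag, Rabs_R0; lra.
Qed.

Lemma BUC_plus m F G : BUC m F -> BUC m G -> BUC m (fun y => F y + G y).
Proof.
  intros [[BF HBF] HF] [[BG HBG] HG]. split.
  - exists (BF + BG). intro x.
    eapply Rle_trans; [apply Rabs_triang | apply Rplus_le_compat; auto].
  - intros e He.
    destruct (HF (e / 2)) as [d1 [Hd1 H1]]; [lra|].
    destruct (HG (e / 2)) as [d2 [Hd2 H2]]; [lra|].
    exists (Rmin d1 d2); split; [apply Rmin_pos; auto|]. intros x y Hxy.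
    specialize (H1 x y (sup_close_weaken m _ _ x y (Rmin_l d1 d2) Hxy)).
    specialize (H2 x y (sup_close_weaken m _ _ x y (Rmin_r d1 d2) Hxy)).
    replace (F x + G x - (F y + G y)) with ((F x - F y) + (G x - G y)) by ring.
    eapply Rle_lt_trans; [apply Rabs_triang | lra].
Qed.

Lemma BUC_mult m F G : BUC m F -> BUC m G -> BUC m (fun y => F y * G y).
Proof.
  intros [[BF HBF] HF] [[BG HBG] HG].
  pose proof (bound_nonneg _ _ HBF). pose proof (bound_nonneg _ _ HBG). split.
  - exists (BF * BG). intro x. rewrite Rabs_mult. apply Rmult_le_compat; auto using Rabs_pos.
  - intros e He.
    set (e' := e / (2 * (BF + BG + 1))).
    assert (He' : e' > 0) by (unfold e'; apply Rdiv_lt_0_compat; lra).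
    destruct (HF e' He') as [d1 [Hd1 H1]]. destruct (HG e' He') as [d2 [Hd2 H2]].
    exists (Rmin d1 d2); split; [apply Rmin_pos; auto|]. intros x y Hxy.
    specialize (H1 x y (sup_close_weaken m _ _ x y (Rmin_l d1 d2) Hxy)).
    specialize (H2 x y (sup_close_weaken m _ _ x y (Rmin_r d1 d2) Hxy)).
    replace (F x * G x - F y * G y) with (F x * (G x - G y) + G y * (F x - F y)) by ring.
    eapply Rle_lt_trans; [apply Rabs_triang|]. rewrite !Rabs_mult.
    assert (Rabs (F x) * Rabs (G x - G y) <= BF * e') by (apply Rmult_le_compat; auto using Rabs_pos; lra).
    assert (Rabs (G y) * Rabs (F x - F y) <= BG * e') by (apply Rmult_le_compat; auto using Rabs_pos; lra).
    assert ((BF + BG) * e' < e).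
    { unfold e'. apply Rmult_lt_reg_r with (2 * (BF + BG + 1)); [lra|].
      field_simplify; [nra | lra]. }
    nra.
Qed.

Lemma BUC_scal m c F : BUC m F -> BUC m (fun y => c * F y).
Proof. intros; apply BUC_mult; auto using BUC_const. Qed.

Lemma BUC_lin m F G a b : BUC m F -> BUC m G -> BUC m (fun y => a * F y + b * G y).
Proof. intros; apply BUC_plus; apply BUC_scal; auto. Qed.

Lemma BUC_minus m F G : BUC m F -> BUC m G -> BUC m (fun y => F y - G y).
Proof.
  intros. apply BUC_ext with (fun y => 1 * F y + (-1) * G y); [apply BUC_lin; auto | intros; ring].
Qed.

Lemma BUC_sq m F : BUC m F -> BUC m (fun y => F y ^ 2).
Proof. intros. apply BUC_ext with (fun y => F y * F y); [apply BUC_mult; auto | intros; ring]. Qed.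

Lemma BUC_upd m F j c : BUC m F -> BUC m (fun y => F (upd y j c)).
Proof.
  intros [[B HB] HU]. split; [exists B; auto|].
  intros e He. destruct (HU e He) as [d [Hd H]]. exists d; split; auto.
  intros x y Hxy. apply H, sup_close_upd; auto.
Qed.

Lemma BUC_shift m F j h : BUC m F -> BUC m (fun y => F (upd y j (y j + h))).
Proof.
  intros [[B HB] HU]. split; [exists B; auto|].
  intros e He. destruct (HU e He) as [d [Hd H]]. exists d; split; auto. intros x y Hxy.
  apply H. intros i Hi. unfold upd. destruct (Nat.eqb_spec i j); auto.
  subst. replace (x j + h - (y j + h)) with (x j - y j) by ring. auto.
Qed.

Lemma BUC_slice m F x j : BUC m F -> cont_R (fun t => F (upd x j t)).
Proof.
  intros [_ HU] t0. apply cont_R_eps. intros e He. destruct (HU e He) as [d [Hd H]].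
  exists d; split; auto. intros y Hy. apply H. intros i Hi. unfold upd. destruct (Nat.eqb i j); auto.
  rewrite Rminus_diag, Rabs_R0; lra.
Qed.

Lemma cube_S k F x : cube_int (S k) F x = Rint (fun t => cube_int k F (upd x (S k) t)) (-1) 1.
Proof. reflexivity. Qed.

Lemma cube_S_integral m k F x : BUC m (cube_int k F) ->
  cube_int (S k) F x = integral (fun t => cube_int k F (upd x (S k) t)) (-1) 1.
Proof. intros H. rewrite cube_S. apply Rint_RInt, ex_RInt_cont_R, (BUC_slice m); auto. Qed.

Lemma integral_abs_le (g : R -> R) M : cont_R g -> (forall t, Rabs (g t) <= M) ->
  Rabs (integral g (-1) 1) <= 2 * M.
Proof.
  intros Hg H. replace 2 with (1 - -1) by ring.
  apply abs_RInt_le_const; auto using ex_RInt_cont_R. lra.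
Qed.

Lemma BUC_cube m k F : BUC m F -> BUC m (cube_int k F).
Proof.
  intros HF. induction k as [|k IH]; [exact HF|].
  assert (Hsl : forall x, cont_R (fun t => cube_int k F (upd x (S k) t))) by (intro; apply (BUC_slice m); auto).
  destruct IH as [[B HB] HU]. split.
  - exists (2 * B). intro x. rewrite (cube_S_integral m) by (split; [exists B|]; auto).
    apply integral_abs_le; auto.
  - intros e He. destruct (HU (e / 4)) as [d [Hd H]]; [lra|].
    exists d; split; auto. intros x y Hxy. rewrite !(cube_S_integral m) by (split; [exists B|]; auto).
    replace (integral (fun t => cube_int k F (upd x (S k) t)) (-1) 1
             - integral (fun t => cube_int k F (upd y (S k) t)) (-1) 1)
      with (integral (fun t => 1 * cube_int k F (upd x (S k) t) + (-1) * cube_int k F (upd y (S k) t)) (-1) 1)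
      by (rewrite integral_lin; auto; ring).
    eapply Rle_lt_trans; [apply integral_abs_le with (M := e / 4)|lra].
    + apply cont_R_lin; auto.
    + intro t. left. replace (1 * cube_int k F (upd x (S k) t) + -1 * cube_int k F (upd y (S k) t))
        with (cube_int k F (upd x (S k) t) - cube_int k F (upd y (S k) t)) by ring.
      apply H, sup_close_upd; auto.
Qed.

Lemma cube_slice_cont m k F x j : BUC m F -> cont_R (fun t => cube_int k F (upd x j t)).
Proof. intros; apply (BUC_slice m), BUC_cube; auto. Qed.

Lemma cube_lin m k F G a b x : BUC m F -> BUC m G ->
  cube_int k (fun y => a * F y + b * G y) x = a * cube_int k F x + b * cube_int k G x.
Proof.
  intros HF HG. revert x. induction k as [|k IH]; intro x; [reflexivity|].
  rewrite cube_S.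
  replace (fun t => cube_int k (fun y => a * F y + b * G y) (upd x (S k) t))
    with (fun t => a * cube_int k F (upd x (S k) t) + b * cube_int k G (upd x (S k) t))
    by (apply functional_extensionality; intro; symmetry; apply IH).
  rewrite Rint_RInt by (apply ex_RInt_cont_R, cont_R_lin; apply (cube_slice_cont m); auto).
  fold (integral (fun t => a * cube_int k F (upd x (S k) t) + b * cube_int k G (upd x (S k) t)) (-1) 1).
  rewrite integral_lin by (apply (cube_slice_cont m); auto).
  rewrite !(cube_S_integral m) by (apply BUC_cube; auto). reflexivity.
Qed.

Lemma cube_indep k F j : (forall y t, F (upd y j t) = F y) -> (j = 0 \/ k < j)%nat ->
  forall x t, cube_int k F (upd x j t) = cube_int k F x.
Proof.
  intros HF. induction k as [|k IH]; intros Hj x t; [apply HF|].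
  rewrite !cube_S. f_equal. apply functional_extensionality. intro s.
  rewrite upd_comm by lia. apply IH. lia.
Qed.

Lemma cube_integrated k F i : (1 <= i <= k)%nat ->
  forall x t, cube_int k F (upd x i t) = cube_int k F x.
Proof.
  induction k as [|k IH]; intros Hi x t; [lia|].
  rewrite !cube_S. f_equal. apply functional_extensionality. intro s.
  destruct (Nat.eq_dec i (S k)) as [->|Hne].
  - rewrite upd_upd. reflexivity.
  - rewrite upd_comm by lia. apply IH. lia.
Qed.

Lemma cube_freeze k F j : (j = 0 \/ k < j)%nat ->
  forall x, cube_int k F x = cube_int k (fun y => F (upd y j (x j))) x.
Proof.
  induction k as [|k IH]; intros Hj x.
  - simpl. rewrite upd_same. reflexivity.
  - rewrite !cube_S. f_equal. apply functional_extensionality. intro s.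
    rewrite IH by lia. rewrite upd_neq by lia. reflexivity.
Qed.

Lemma cube_shift k F j x c : (j = 0 \/ k < j)%nat ->
  cube_int k F (upd x j c) = cube_int k (fun y => F (upd y j c)) x.
Proof.
  intros Hj. rewrite (cube_freeze k F j Hj). rewrite upd_eq.
  apply cube_indep; auto. intros y t. rewrite upd_upd. reflexivity.
Qed.

Lemma cube_ext k F G x : (forall y, F y = G y) -> cube_int k F x = cube_int k G x.
Proof. intros E. f_equal. apply functional_extensionality; auto. Qed.

(** Factors that do not depend on the integrated coordinates can be pulled
    out; they need not be bounded (this handles the weights of Gamma). *)
Lemma cube_pull_out m k H1 G1 H2 G2 x :
  (forall y i t, (1 <= i <= k)%nat -> H1 (upd y i t) = H1 y) ->
  (forall y i t, (1 <= i <= k)%nat -> H2 (upd y i t) = H2 y) -> BUC m G1 -> BUC m G2 ->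
  cube_int k (fun y => H1 y * G1 y + H2 y * G2 y) x
  = H1 x * cube_int k G1 x + H2 x * cube_int k G2 x.
Proof.
  intros HH1 HH2 HG1 HG2. revert x. induction k as [|k IHk]; intro x; [reflexivity|].
  rewrite cube_S.
  replace (fun t => cube_int k (fun y => H1 y * G1 y + H2 y * G2 y) (upd x (S k) t))
    with (fun t => H1 x * cube_int k G1 (upd x (S k) t) + H2 x * cube_int k G2 (upd x (S k) t)).
  - rewrite Rint_RInt by (apply ex_RInt_cont_R, cont_R_lin; apply (cube_slice_cont m); auto).
    fold (integral (fun t => H1 x * cube_int k G1 (upd x (S k) t) + H2 x * cube_int k G2 (upd x (S k) t)) (-1) 1).
    rewrite integral_lin by (apply (cube_slice_cont m); auto).
    rewrite !(cube_S_integral m) by (apply BUC_cube; auto). reflexivity.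
  - apply functional_extensionality; intro t.
    rewrite IHk by (intros; (apply HH1 || apply HH2); lia). rewrite HH1, HH2 by lia. reflexivity.
Qed.

Lemma cube_of_invariant m k N x : (forall y i t, (1 <= i <= k)%nat -> N (upd y i t) = N y) ->
  cube_int k N x = 2 ^ k * N x.
Proof.
  intros HN.
  assert (Hone : forall x, cube_int k (fun _ => 1) x = 2 ^ k).
  { clear HN x. induction k as [|k IH]; intro x; [reflexivity|].
    rewrite (cube_S_integral m) by (apply BUC_cube, BUC_const).
    rewrite (integral_ext _ (fun _ => 2 ^ k)) by (intro; apply IH). rewrite integral_const. simpl; ring. }
  transitivity (cube_int k (fun y => N y * 1 + 0 * 1) x).
  - apply cube_ext; intro; ring.
  - rewrite (cube_pull_out m) by (auto using BUC_const). rewrite Hone. ring.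
Qed.

Lemma cube_mono m k F G x : BUC m F -> BUC m G -> (forall y, F y <= G y) ->
  cube_int k F x <= cube_int k G x.
Proof.
  intros HF HG Hle. revert x. induction k as [|k IH]; intro x; [apply Hle|].
  rewrite !(cube_S_integral m) by (apply BUC_cube; auto).
  apply integral_le; try lra; try (apply (cube_slice_cont m); auto). intros; apply IH.
Qed.

Lemma cube_nonneg m k F x : BUC m F -> (forall y, 0 <= F y) -> 0 <= cube_int k F x.
Proof.
  intros HF H. replace 0 with (2 ^ k * 0) by ring.
  rewrite <- (cube_of_invariant m k (fun _ => 0) x) by auto.
  apply (cube_mono m); auto using BUC_const.
Qed.

Lemma cube_abs_le m k F x e : BUC m F -> (forall y, Rabs (F y) <= e) ->
  Rabs (cube_int k F x) <= 2 ^ k * e.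
Proof.
  intros HF H. apply Rabs_le. split.
  - replace (- (2 ^ k * e)) with (2 ^ k * (- e)) by ring.
    rewrite <- (cube_of_invariant m k (fun _ => - e) x) by auto.
    apply (cube_mono m); auto using BUC_const. intro y; specialize (H y). apply Rabs_le_between in H; lra.
  - rewrite <- (cube_of_invariant m k (fun _ => e) x) by auto.
    apply (cube_mono m); auto using BUC_const. intro y; specialize (H y). apply Rabs_le_between in H; lra.
Qed.

Lemma cube_jensen m k F x : BUC m F ->
  (cube_int k F x) ^ 2 <= 2 ^ k * cube_int k (fun y => F y ^ 2) x.
Proof.
  intros HF. revert x. induction k as [|k IH]; intro x; [simpl; lra|].
  assert (HF2 : BUC m (fun y => F y ^ 2)) by (apply BUC_sq; auto).
  rewrite !(cube_S_integral m) by (apply BUC_cube; auto).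
  eapply Rle_trans; [apply integral_sq_le; [lra | apply (cube_slice_cont m); auto]|].
  replace (2 ^ S k * integral (fun t => cube_int k (fun y => F y ^ 2) (upd x (S k) t)) (-1) 1)
    with (2 * integral (fun t => 2 ^ k * cube_int k (fun y => F y ^ 2) (upd x (S k) t) + 0 * 0) (-1) 1).
  - replace (1 - -1) with 2 by ring. apply Rmult_le_compat_l; [lra|].
    apply integral_le; try lra.
    + apply cont_R_sq, (cube_slice_cont m); auto.
    + apply (cont_R_lin _ (fun _ => 0)); [apply (cube_slice_cont m); auto | apply cont_R_const].
    + intros t _. rewrite Rmult_0_l, Rplus_0_r. apply IH.
  - rewrite (integral_lin _ (fun _ => 0)) by (auto using cont_R_const; apply (cube_slice_cont m); auto).
    simpl; ring.
Qed.

Definition unif_diff j F F' : Prop := forall eps, eps > 0 -> exists d, d > 0 /\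
  forall x h, h <> 0 -> Rabs h < d -> Rabs ((F (upd x j (x j + h)) - F x) / h - F' x) <= eps.

Lemma unif_diff_derive j F F' : unif_diff j F F' ->
  forall x t, is_derive (fun s => F (upd x j s)) t (F' (upd x j t)).
Proof.
  intros HU x t. apply is_derive_Reals. intros e He.
  destruct (HU (e / 2)) as [d [Hd H]]; [lra|].
  exists (mkposreal d Hd). intros h Hh Hhd. simpl in Hhd.
  specialize (H (upd x j t) h Hh Hhd). rewrite upd_eq, !upd_upd in H.
  lra.
Qed.

Lemma cube_unif_diff m k F F' j : BUC m F -> BUC m F' -> unif_diff j F F' -> (j = 0 \/ k < j)%nat ->
  unif_diff j (cube_int k F) (cube_int k F').
Proof.
  intros HF HF' HU Hj e He.
  destruct (HU (e / 2 ^ k)) as [d [Hd H]]. { apply Rdiv_lt_0_compat; auto. apply pow_lt; lra. }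
  exists d; split; auto. intros x h Hh Hhd.
  set (Fs := fun y => F (upd y j (y j + h))).
  assert (Eshift : cube_int k F (upd x j (x j + h)) = cube_int k Fs x).
  { rewrite (cube_shift k F j x _ Hj), (cube_freeze k Fs j Hj), (cube_freeze k _ j Hj).
    apply cube_ext; intro y. unfold Fs. rewrite !upd_upd, upd_eq. reflexivity. }
  rewrite Eshift.
  assert (HFs : BUC m Fs) by (apply BUC_shift; auto).
  replace ((cube_int k Fs x - cube_int k F x) / h - cube_int k F' x) with
    (cube_int k (fun y => (/ h) * (1 * Fs y + (-1) * F y) + (-1) * F' y) x).
  - replace e with (2 ^ k * (e / 2 ^ k)) by (field; apply pow_nonzero; lra).
    apply (cube_abs_le m); [apply BUC_lin; auto; apply BUC_lin; auto|].
    intro y. specialize (H y h Hh Hhd). unfold Fs.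
    replace (/ h * (1 * F (upd y j (y j + h)) + -1 * F y) + -1 * F' y) with
       ((F (upd y j (y j + h)) - F y) / h - F' y) by (field; auto). auto.
  - rewrite (cube_lin m k (fun y => 1 * Fs y + (-1) * F y)) by (auto; apply BUC_lin; auto).
    rewrite (cube_lin m) by auto. field. auto.
Qed.

(** Compactly supported continuous functions are BUC: Heine's theorem on the
    box [-r,r]^{1+m}, via Coquelicot's compactness of boxes of R^n (points
    are transported to and from its tuple type [Compactness.Tn]). *)

Fixpoint to_tuple (n : nat) (x : nat -> R) : Compactness.Tn n R :=
  match n with 0 => tt | S n' => (x 0%nat, to_tuple n' (fun i => x (S i))) end.

Fixpoint of_tuple (n : nat) : Compactness.Tn n R -> nat -> R :=
  match n with
  | 0 => fun _ _ => 0
  | S n' => fun t i => match i with 0 => fst t | S i' => of_tuple n' (snd t) i' end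
  end.

Lemma to_tuple_in_box n a b x : (forall i, (i < n)%nat -> a <= x i <= b) ->
  bounded_n n (to_tuple n (fun _ => a)) (to_tuple n (fun _ => b)) (to_tuple n x).
Proof.
  revert x; induction n as [|n IH]; intros x H; simpl; auto.
  split; [apply H; lia|]. apply IH. intros i Hi. apply H; lia.
Qed.

Lemma to_tuple_close n d x t : close_n n d (to_tuple n x) t ->
  forall i, (i < n)%nat -> Rabs (x i - of_tuple n t i) < d.
Proof.
  revert x; induction n as [|n IH]; intros x H i Hi; [lia|].
  destruct t as [t1 t2]. simpl in H. destruct H as [H1 H2].
  destruct i as [|i]; simpl; auto. apply (IH t2 (fun i => x (S i))); auto. lia.
Qed.

Definition vanishes_outside m (Rad : R) F : Prop :=
  forall x, (exists i, (i <= m)%nat /\ Rabs (x i) > Rad) -> F x = 0.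

Lemma in_box_or_outside m r x :
  (forall i, (i <= m)%nat -> - r <= x i <= r) \/ (exists i, (i <= m)%nat /\ Rabs (x i) > r).
Proof.
  destruct (classic (exists i, (i <= m)%nat /\ Rabs (x i) > r)) as [Hout|Hin]; [now right|left].
  intros i Hi. apply Rabs_le_between. apply Rnot_lt_le. intro Hlt. apply Hin. now exists i.
Qed.

Lemma cont_modulus m g eps : (forall x, cont_at m g x) -> eps > 0 ->
  { dl : (nat -> R) -> R | forall p, dl p > 0 /\
      forall y, (forall i, (i <= m)%nat -> Rabs (y i - p i) < dl p) -> Rabs (g y - g p) < eps }.
Proof.
  intros Hc He.
  exists (fun p => proj1_sig (constructive_indefinite_description _ (Hc p eps He))).
  intro p. destruct (constructive_indefinite_description _ (Hc p eps He)) as [d Hd]. exact Hd.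
Qed.

Lemma unif_cont_of_cont m g Rad : (forall x, cont_at m g x) -> vanishes_outside m Rad g ->
  unif_cont m g.
Proof.
  intros Hc Hz e He.
  destruct (cont_modulus m g (e / 2) Hc ltac:(lra)) as [dl Hdl].
  set (n := S m). set (r := Rabs Rad + 1).
  assert (Hpos : forall t : Compactness.Tn n R, dl (of_tuple n t) / 2 > 0).
  { intro t. destruct (Hdl (of_tuple n t)) as [H _]. lra. }
  destruct (compactness_value n (to_tuple n (fun _ => - r)) (to_tuple n (fun _ => r))
              (fun t => mkposreal _ (Hpos t))) as [d Hd].
  exists (Rmin d 1). split; [apply Rmin_pos; [apply cond_pos | lra]|].
  intros x y Hxy.
  destruct (in_box_or_outside m r x) as [Hin | [i [Hi Hxi]]].
  -
    specialize (Hd _ (to_tuple_in_box n (- r) r x ltac:(intros i Hi; apply Hin; unfold n in Hi; lia))).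
    apply NNPP. intro Hn. apply Hd. intros [t [_ [Hcl Hdt]]]. apply Hn.
    set (p := of_tuple n t) in *. simpl in Hdt.
    destruct (Hdl p) as [Hp0 Hp].
    assert (Hxp : forall i, (i <= m)%nat -> Rabs (x i - p i) < dl p / 2).
    { intros i Hi. exact (to_tuple_close n _ x t Hcl i ltac:(unfold n; lia)). }
    assert (Hx : Rabs (g x - g p) < e / 2) by (apply Hp; intros i Hi; specialize (Hxp i Hi); lra).
    assert (Hy : Rabs (g y - g p) < e / 2).
    { apply Hp. intros i Hi. specialize (Hxp i Hi). specialize (Hxy i Hi). pose proof (Rmin_l d 1).
      replace (y i - p i) with ((x i - p i) - (x i - y i)) by ring.
      eapply Rle_lt_trans; [apply Rabs_triang|]. rewrite Rabs_Ropp. lra. }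
    replace (g x - g y) with ((g x - g p) - (g y - g p)) by ring.
    eapply Rle_lt_trans; [apply Rabs_triang|]. rewrite Rabs_Ropp. lra.
  -
    specialize (Hxy i Hi). pose proof (Rmin_r d 1). pose proof (Rle_abs Rad).
    assert (Hyi : Rabs (y i) > Rad).
    { replace (y i) with (x i - (x i - y i)) by ring.
      pose proof (Rabs_triang_inv (x i) (x i - y i)). unfold r in Hxi. lra. }
    rewrite (Hz x), (Hz y); [rewrite Rminus_diag, Rabs_R0; auto | exists i; split; auto |].
    exists i; split; auto. unfold r in Hxi; lra.
Qed.

Lemma bounded_of_cont m g Rad : (forall x, cont_at m g x) -> vanishes_outside m Rad g -> bounded_fun g.
Proof.
  intros Hc Hz.
  destruct (cont_modulus m g 1 Hc ltac:(lra)) as [dl Hdl].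
  set (n := S m). set (r := Rabs Rad + 1).
  assert (Hpos : forall t : Compactness.Tn n R, dl (of_tuple n t) > 0).
  { intro t. destruct (Hdl (of_tuple n t)) as [H _]. lra. }
  pose proof (compactness_list n (to_tuple n (fun _ => - r)) (to_tuple n (fun _ => r))
                (fun t => mkposreal _ (Hpos t))) as Hl.
  apply NNPP. intro Hn. apply Hl. intros [l Hl2]. apply Hn.
  set (M := fold_right (fun t acc => Rmax (Rabs (g (of_tuple n t))) acc) 0 l).
  assert (HM : forall t, In t l -> Rabs (g (of_tuple n t)) <= M).
  { unfold M; clear. induction l as [|a l IH]; simpl; intros t Ht; [contradiction|].
    destruct Ht as [->|Ht]; [apply Rmax_l|]. eapply Rle_trans; [apply IH; auto | apply Rmax_r]. }
  assert (HM0 : 0 <= M).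
  { unfold M. clear. induction l; simpl; [lra|]. eapply Rle_trans; [exact IHl | apply Rmax_r]. }
  exists (M + 1). intro x.
  destruct (in_box_or_outside m r x) as [Hin | [i [Hi Hxi]]].
  - destruct (Hl2 _ (to_tuple_in_box n (- r) r x ltac:(intros i Hi; apply Hin; unfold n in Hi; lia)))
      as [t [Ht [_ Hcl]]].
    destruct (Hdl (of_tuple n t)) as [_ Hp].
    assert (Hx : Rabs (g x - g (of_tuple n t)) < 1).
    { apply Hp. intros i Hi. exact (to_tuple_close n _ x t Hcl i ltac:(unfold n; lia)). }
    specialize (HM t Ht). pose proof (Rabs_triang_inv (g x) (g (of_tuple n t))). lra.
  - rewrite (Hz x), Rabs_R0; [lra|]. exists i; split; auto.
    pose proof (Rle_abs Rad). unfold r in Hxi; lra.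
Qed.

Lemma BUC_of_cont m g Rad : (forall x, cont_at m g x) -> vanishes_outside m Rad g -> BUC m g.
Proof. intros; split; [eapply bounded_of_cont | eapply unif_cont_of_cont]; eauto. Qed.

Lemma mvt_any (f f' : R -> R) a b : (forall c, derivable_pt_lim f c (f' c)) ->
  exists c, f b - f a = f' c * (b - a) /\ Rabs (c - a) <= Rabs (b - a).
Proof.
  intros Hd. destruct (Rtotal_order a b) as [Hab|[Hab|Hab]].
  - destruct (MVT_cor2 f f' a b Hab (fun c _ => Hd c)) as [c [E Hc]].
    exists c; split; auto. rewrite !Rabs_right by lra. lra.
  - subst. exists b. split; [ring|]. rewrite Rminus_diag, Rabs_R0; lra.
  - destruct (MVT_cor2 f f' b a Hab (fun c _ => Hd c)) as [c [E Hc]].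
    exists c; split; [lra|]. rewrite !Rabs_left by lra. lra.
Qed.

Lemma partial_along m phi i x c : C1 m phi -> (i <= m)%nat ->
  derivable_pt_lim (fun t => phi (upd x i t)) c (partial phi i (upd x i c)).
Proof.
  intros [_ [H _]] Hi. pose proof (H i (upd x i c) Hi) as P.
  rewrite upd_eq in P. replace (fun t => phi (upd x i t)) with (fun t => phi (upd (upd x i c) i t)); auto.
  apply functional_extensionality; intro t; rewrite upd_upd; auto.
Qed.

Lemma mvt_coord m phi j x c : C1 m phi -> (j <= m)%nat ->
  exists z, phi (upd x j c) - phi x = partial phi j (upd x j z) * (c - x j)
            /\ Rabs (z - x j) <= Rabs (c - x j).
Proof.
  intros H Hj.
  destruct (mvt_any (fun t => phi (upd x j t)) (fun t => partial phi j (upd x j t)) (x j) c)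
    as [z [E Hz]]; [intro z; apply (partial_along m); auto|].
  rewrite upd_same in E. eauto.
Qed.

Lemma partial_vanishes_outside m phi Rad j : C1 m phi -> (j <= m)%nat ->
  vanishes_outside m Rad phi -> vanishes_outside m Rad (partial phi j).
Proof.
  intros H Hj Hz x [i [Hi Hxi]].
  apply (uniqueness_limite (fun t => phi (upd x j t)) (x j)).
  { rewrite <- (upd_same x j) at 2. apply (partial_along m); auto. }
  intros e He. assert (Hd : Rabs (x i) - Rad > 0) by lra.
  exists (mkposreal _ Hd). intros h Hh Hhd. simpl in Hhd.
  rewrite (Hz (upd x j (x j + h))), (Hz (upd x j (x j))).
  - rewrite Rminus_diag. unfold Rdiv. rewrite Rmult_0_l, Rminus_0_r, Rabs_R0; lra.
  - exists i; split; auto. rewrite upd_same; auto.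
  - exists i; split; auto. destruct (Nat.eq_dec i j) as [->|Hne].
    + rewrite upd_eq. pose proof (Rabs_triang_inv (x j) (- h)) as H0.
      rewrite Rabs_Ropp in H0. replace (x j - - h) with (x j + h) in H0 by ring. lra.
    + rewrite upd_neq; auto.
Qed.

Lemma unif_diff_of_C1 m phi j : C1 m phi -> (j <= m)%nat -> unif_cont m (partial phi j) ->
  unif_diff j phi (partial phi j).
Proof.
  intros H Hj HU e He. destruct (HU (e / 2)) as [d [Hd Hc]]; [lra|].
  exists d; split; auto. intros x h Hh Hhd.
  destruct (mvt_coord m phi j x (x j + h) H Hj) as [z [E Hz]].
  rewrite E. replace (x j + h - x j) with h in * by ring.
  replace (partial phi j (upd x j z) * h / h - partial phi j x)
    with (partial phi j (upd x j z) - partial phi j x) by (field; auto).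
  left. apply Rlt_le_trans with (e / 2); [|lra]. apply Hc. intros i Hi. unfold upd.
  destruct (Nat.eqb_spec i j); [subst; lra|]. rewrite Rminus_diag, Rabs_R0; lra.
Qed.

Lemma bounded_family (f : nat -> (nat -> R) -> R) m : (forall j, (j <= m)%nat -> bounded_fun (f j)) ->
  exists B, 0 <= B /\ forall j, (j <= m)%nat -> forall x, Rabs (f j x) <= B.
Proof.
  induction m as [|m IH]; intros H.
  - destruct (H 0%nat (le_n 0)) as [B HB]. exists B. split; [eapply bound_nonneg; eauto|].
    intros j Hj x. replace j with 0%nat by lia. auto.
  - destruct IH as [B1 [HB0 HB1]]; [intros; apply H; lia|].
    destruct (H (S m) (le_n _)) as [B2 HB2]. exists (Rmax B1 B2).
    split; [eapply Rle_trans; [exact HB0 | apply Rmax_l]|]. intros j Hj x.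
    destruct (Nat.eq_dec j (S m)) as [->|Hne].
    + eapply Rle_trans; [apply HB2 | apply Rmax_r].
    + eapply Rle_trans; [apply HB1; lia | apply Rmax_l].
Qed.

Definition mix (k : nat) x y : nat -> R := fun i => if Nat.ltb i k then y i else x i.

Lemma mix_S k x y : mix (S k) x y = upd (mix k x y) k (y k).
Proof.
  apply functional_extensionality; intro i. unfold mix, upd.
  destruct (Nat.ltb_spec i (S k)); destruct (Nat.ltb_spec i k); destruct (Nat.eqb_spec i k);
    subst; auto; lia.
Qed.

Lemma C1_lipschitz m phi B : C1 m phi -> 0 <= B ->
  (forall j x, (j <= m)%nat -> Rabs (partial phi j x) <= B) ->
  forall d x y, sup_close m d x y -> Rabs (phi y - phi x) <= INR (S m) * (B * d).
Proof.
  intros H HB0 HB d x y Hxy.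
  assert (Hpath : forall k, (k <= S m)%nat -> Rabs (phi (mix k x y) - phi x) <= INR k * (B * d)).
  { induction k as [|k IH]; intros Hk.
    - replace (mix 0 x y) with x by (apply functional_extensionality; reflexivity).
      rewrite Rminus_diag, Rabs_R0; simpl; lra.
    - rewrite mix_S, S_INR.
      destruct (mvt_coord m phi k (mix k x y) (y k) H ltac:(lia)) as [z [E _]].
      assert (Hstep : Rabs (phi (upd (mix k x y) k (y k)) - phi (mix k x y)) <= B * d).
      { rewrite E, Rabs_mult. apply Rmult_le_compat; auto using Rabs_pos; [apply HB; lia|].
        unfold mix. rewrite (proj2 (Nat.ltb_ge k k)) by lia.
        left. rewrite <- Rabs_Ropp. replace (- (y k - x k)) with (x k - y k) by ring. apply Hxy. lia. }
      specialize (IH ltac:(lia)).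
      replace (phi (upd (mix k x y) k (y k)) - phi x) with
        ((phi (upd (mix k x y) k (y k)) - phi (mix k x y)) + (phi (mix k x y) - phi x)) by ring.
      eapply Rle_trans; [apply Rabs_triang | lra]. }
  replace (phi y) with (phi (mix (S m) x y)); [apply Hpath; lia|].
  destruct H as [Hdep _]. apply Hdep. intros i Hi. unfold mix.
  rewrite (proj2 (Nat.ltb_lt i (S m))) by lia. reflexivity.
Qed.

Lemma C1c_regular m phi : C1c m phi ->
  BUC m phi /\ (forall j, (j <= m)%nat -> BUC m (partial phi j))
  /\ (forall j, (j <= m)%nat -> unif_diff j phi (partial phi j)).
Proof.
  intros [HC [Rad Hz]].
  assert (HG : forall j, (j <= m)%nat -> BUC m (partial phi j)).
  { intros j Hj. apply (BUC_of_cont m _ Rad); [intro x; apply HC; auto|].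
    apply (partial_vanishes_outside m); auto. }
  destruct (bounded_family (fun j => partial phi j) m (fun j Hj => proj1 (HG j Hj))) as [B [HB0 HB]].
  pose proof (C1_lipschitz m phi B HC HB0 (fun j x Hj => HB j Hj x)) as Hlip.
  assert (HSm : 0 < INR (S m)) by (apply lt_0_INR; lia).
  split; [split|split; auto; intros j Hj; apply (unif_diff_of_C1 m); auto; apply HG, Hj].
  - (* compare with a point outside the support, reached along coordinate 0 *)
    exists (INR (S m) * (B * (2 * Rabs Rad + 2))). intro x.
    destruct (in_box_or_outside m Rad x) as [Hin | Hout]; [|rewrite Hz by auto; rewrite Rabs_R0;
      apply Rmult_le_pos; [lra | apply Rmult_le_pos; [lra | pose proof (Rabs_pos Rad); lra]]].
    set (y := upd x 0 (Rabs Rad + 1)).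
    assert (Hy : phi y = 0).
    { apply Hz. exists 0%nat; split; [lia|]. unfold y; rewrite upd_eq.
      rewrite Rabs_right; pose proof (Rabs_pos Rad); pose proof (Rle_abs Rad); lra. }
    assert (Hxy : sup_close m (2 * Rabs Rad + 2) x y).
    { intros i Hi. unfold y, upd. destruct (Nat.eqb_spec i 0); [subst|rewrite Rminus_diag, Rabs_R0;
        pose proof (Rabs_pos Rad); lra].
      specialize (Hin 0%nat Hi). apply Rabs_lt_between. pose proof (Rle_abs Rad).
      pose proof (Rabs_pos Rad). pose proof (Rle_abs (- Rad)). rewrite Rabs_Ropp in *. lra. }
    specialize (Hlip _ _ _ Hxy). rewrite Hy, Rminus_0_l, Rabs_Ropp in Hlip. exact Hlip.
  - intros e He. assert (HL : 0 < INR (S m) * (B + 1)) by (apply Rmult_lt_0_compat; lra).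
    exists (e / (2 * (INR (S m) * (B + 1)))). split; [apply Rdiv_lt_0_compat; lra|].
    intros x y Hxy. specialize (Hlip _ _ _ Hxy). rewrite <- Rabs_Ropp.
    replace (- (phi x - phi y)) with (phi y - phi x) by ring.
    eapply Rle_lt_trans; [exact Hlip|].
    set (q := e / (2 * (INR (S m) * (B + 1)))).
    assert (Hq : INR (S m) * (B + 1) * q = e / 2) by (unfold q; field; lra).
    assert (0 < q) by (unfold q; apply Rdiv_lt_0_compat; lra).
    nra.
Qed.

Lemma unif_diff_lin j F F' G G' a b : unif_diff j F F' -> unif_diff j G G' ->
  unif_diff j (fun y => a * F y + b * G y) (fun y => a * F' y + b * G' y).
Proof.
  intros HF HG e He. set (e' := e / (Rabs a + Rabs b + 1)).
  pose proof (Rabs_pos a); pose proof (Rabs_pos b).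
  assert (He' : e' > 0) by (unfold e'; apply Rdiv_lt_0_compat; lra).
  destruct (HF e' He') as [d1 [Hd1 H1]]. destruct (HG e' He') as [d2 [Hd2 H2]].
  exists (Rmin d1 d2). split; [apply Rmin_pos; auto|]. intros x h Hh Hhd.
  specialize (H1 x h Hh ltac:(pose proof (Rmin_l d1 d2); lra)).
  specialize (H2 x h Hh ltac:(pose proof (Rmin_r d1 d2); lra)).
  set (y := upd x j (x j + h)) in *.
  replace ((a * F y + b * G y - (a * F x + b * G x)) / h - (a * F' x + b * G' x))
    with (a * ((F y - F x) / h - F' x) + b * ((G y - G x) / h - G' x)) by (field; auto).
  eapply Rle_trans; [apply Rabs_triang|]. rewrite !Rabs_mult.
  assert (Rabs a * Rabs ((F y - F x) / h - F' x) <= Rabs a * e') by (apply Rmult_le_compat_l; auto).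
  assert (Rabs b * Rabs ((G y - G x) / h - G' x) <= Rabs b * e') by (apply Rmult_le_compat_l; auto).
  assert ((Rabs a + Rabs b) * e' <= e).
  { unfold e'. apply Rmult_le_reg_r with (Rabs a + Rabs b + 1); [lra|]. field_simplify; [nra|lra]. }
  nra.
Qed.

Lemma unif_diff_invariant j F : (forall y t, F (upd y j t) = F y) -> unif_diff j F (fun _ => 0).
Proof.
  intros HF e He. exists 1. split; [lra|]. intros x h Hh _. rewrite HF.
  replace ((F x - F x) / h - 0) with 0 by (field; auto). rewrite Rabs_R0; lra.
Qed.

Lemma unif_diff_ext j F F' G G' : unif_diff j F F' ->
  (forall y, F y = G y) -> (forall y, F' y = G' y) -> unif_diff j G G'.
Proof.
  intros H EF EF'. replace G with F by (apply functional_extensionality; auto).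
  replace G' with F' by (apply functional_extensionality; auto). exact H.
Qed.

Lemma unif_diff_mult m j F F' G G' : BUC m F -> BUC m G -> BUC m G' ->
  unif_diff j F F' -> unif_diff j G G' ->
  unif_diff j (fun y => F y * G y) (fun y => F' y * G y + F y * G' y).
Proof.
  intros [[BF HBF] HUF] [[BG HBG] _] [[BG' HBG'] _] HF HG e He.
  pose proof (bound_nonneg _ _ HBF) as PF. pose proof (bound_nonneg _ _ HBG) as PG.
  pose proof (bound_nonneg _ _ HBG') as PG'.
  set (e' := e / (BF + BG + BG' + 1)).
  assert (He' : e' > 0) by (unfold e'; apply Rdiv_lt_0_compat; lra).
  destruct (HF e' He') as [d1 [Hd1 H1]]. destruct (HG e' He') as [d2 [Hd2 H2]].
  destruct (HUF e' He') as [d3 [Hd3 H3]].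
  exists (Rmin d1 (Rmin d2 d3)). split; [repeat apply Rmin_pos; auto|]. intros x h Hh Hhd.
  pose proof (Rmin_l d1 (Rmin d2 d3)) as M1. pose proof (Rmin_r d1 (Rmin d2 d3)) as M2.
  pose proof (Rmin_l d2 d3) as M3. pose proof (Rmin_r d2 d3) as M4.
  specialize (H1 x h Hh ltac:(lra)). specialize (H2 x h Hh ltac:(lra)).
  assert (H3' : Rabs (F (upd x j (x j + h)) - F x) < e').
  { apply H3. intros i Hi. unfold upd. destruct (Nat.eqb_spec i j).
    - subst. replace (x j + h - x j) with h by ring. lra.
    - rewrite Rminus_diag, Rabs_R0; lra. }
  set (F1 := F (upd x j (x j + h))) in *. set (G1 := G (upd x j (x j + h))) in *.
  replace ((F1 * G1 - F x * G x) / h - (F' x * G x + F x * G' x)) with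
    (F1 * ((G1 - G x) / h - G' x) + (F1 - F x) * G' x + G x * ((F1 - F x) / h - F' x)) by (field; auto).
  eapply Rle_trans; [apply Rabs_triang|].
  eapply Rle_trans; [apply Rplus_le_compat_r; apply Rabs_triang|]. rewrite !Rabs_mult.
  assert (Rabs F1 * Rabs ((G1 - G x) / h - G' x) <= BF * e') by (apply Rmult_le_compat; auto using Rabs_pos; apply HBF).
  assert (Rabs (F1 - F x) * Rabs (G' x) <= e' * BG') by (apply Rmult_le_compat; auto using Rabs_pos; lra).
  assert (Rabs (G x) * Rabs ((F1 - F x) / h - F' x) <= BG * e') by (apply Rmult_le_compat; auto using Rabs_pos).
  assert ((BF + BG + BG') * e' <= e).
  { unfold e'. apply Rmult_le_reg_r with (BF + BG + BG' + 1); [lra|]. field_simplify; [nra|lra]. }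
  nra.
Qed.

Lemma sum_sq_nonneg k (g : nat -> R) : 0 <= sum_1_to k (fun i => g i ^ 2).
Proof. induction k; cbn [sum_1_to]; [lra|]. pose proof (pow2_ge_0 (g (S k))). lra. Qed.

Lemma BUC_sum_sq m k (fd : nat -> (nat -> R) -> R) : (forall i, (1 <= i <= k)%nat -> BUC m (fd i)) ->
  BUC m (fun y => sum_1_to k (fun i => fd i y ^ 2)).
Proof.
  induction k as [|k IH]; intros H; simpl; [apply BUC_const|].
  apply BUC_plus; [apply IH; intros; apply H; lia | apply BUC_sq, H; lia].
Qed.

(** Poincaré inequality on the cube [-1,1]^k, by induction on k: the mean
    over k+1 coordinates is the 1-d mean of the k-dimensional means. *)

Definition cube_mean k F x : R := cube_int k F x / 2 ^ k.

Lemma two_pow_pos k : 0 < 2 ^ k.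
Proof. apply pow_lt; lra. Qed.

Lemma BUC_cube_mean m k F : BUC m F -> BUC m (cube_mean k F).
Proof.
  intros HF. apply BUC_ext with (fun y => / 2 ^ k * cube_int k F y).
  - apply BUC_scal, BUC_cube; auto.
  - intros; unfold cube_mean, Rdiv; ring.
Qed.

Lemma cube_mean_invariant k F i : (1 <= i <= k)%nat ->
  forall x t, cube_mean k F (upd x i t) = cube_mean k F x.
Proof. intros Hi x t. unfold cube_mean. rewrite cube_integrated by auto. reflexivity. Qed.

Lemma cube_mean_S m k F x : BUC m F ->
  cube_mean (S k) F x = integral (fun t => cube_mean k F (upd x (S k) t)) (-1) 1 / 2.
Proof.
  intros HF. unfold cube_mean. rewrite (cube_S_integral m) by (apply BUC_cube; auto).
  rewrite (integral_ext (fun t => cube_int k F (upd x (S k) t) / 2 ^ k)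
             (fun t => / 2 ^ k * cube_int k F (upd x (S k) t) + 0 * 0)) by (intro; unfold Rdiv; ring).
  rewrite (integral_lin _ (fun _ => 0)) by (auto using cont_R_const; apply (cube_slice_cont m); auto).
  rewrite integral_const. simpl. field. apply pow_nonzero; lra.
Qed.

Lemma slice_poincare m k F F' x : BUC m F -> BUC m F' -> unif_diff (S k) F F' ->
  integral (fun t => (cube_mean k F (upd x (S k) t) - cube_mean (S k) F x) ^ 2) (-1) 1
  <= 16 / 2 ^ k * cube_int (S k) (fun y => F' y ^ 2) x.
Proof.
  intros HF HF' HU. pose proof (two_pow_pos k) as Hk.
  set (g := fun t => cube_mean k F (upd x (S k) t)).
  set (g' := fun t => cube_mean k F' (upd x (S k) t)).
  assert (Hg' : cont_R g') by (apply (BUC_slice m), BUC_cube_mean; auto).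
  assert (Hder : forall t, is_derive g t (g' t)).
  { intro t. eapply is_derive_eq.
    - apply (is_derive_mult_R (fun s => cube_int k F (upd x (S k) s)) (fun _ => / 2 ^ k));
        [apply (unif_diff_derive (S k) (cube_int k F) (cube_int k F')), (cube_unif_diff m); auto; lia | apply is_derive_const_R].
    - unfold g', cube_mean. field. lra. }
  assert (Hjensen : forall t, g' t ^ 2 <= / 2 ^ k * cube_int k (fun y => F' y ^ 2) (upd x (S k) t)).
  { intro t. pose proof (cube_jensen m k F' (upd x (S k) t) HF') as J. unfold g', cube_mean.
    replace ((cube_int k F' (upd x (S k) t) / 2 ^ k) ^ 2)
      with (/ 2 ^ k * (/ 2 ^ k * cube_int k F' (upd x (S k) t) ^ 2)) by (field; lra).
    apply Rmult_le_compat_l; [left; apply Rinv_0_lt_compat; lra|].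
    apply Rmult_le_reg_l with (2 ^ k); [lra|]. field_simplify; lra. }
  rewrite (cube_mean_S m) by auto. fold g.
  eapply Rle_trans; [apply poincare_interval; eauto|].
  rewrite (cube_S_integral m) by (apply BUC_cube, BUC_sq; auto).
  replace (16 / 2 ^ k * integral (fun t => cube_int k (fun y => F' y ^ 2) (upd x (S k) t)) (-1) 1)
    with (16 * integral (fun t => / 2 ^ k * cube_int k (fun y => F' y ^ 2) (upd x (S k) t) + 0 * 0) (-1) 1).
  - apply Rmult_le_compat_l; [lra|]. apply integral_le; [lra | apply cont_R_sq; auto | |].
    + apply (cont_R_lin _ (fun _ => 0)); auto using cont_R_const. apply (cube_slice_cont m), BUC_sq; auto.
    + intros t _. rewrite Rmult_0_l, Rplus_0_r. apply Hjensen.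
  - rewrite (integral_lin _ (fun _ => 0))
      by (auto using cont_R_const; apply (cube_slice_cont m), BUC_sq; auto).
    unfold Rdiv; ring.
Qed.

(** Pointwise splitting F - mean_{k+1} = (F - mean_k) + (mean_k - mean_{k+1});
    the second term does not depend on the coordinates 1..k. *)
Lemma cube_dev_split m k F z : BUC m F ->
  cube_int k (fun y => (F y - cube_mean (S k) F y) ^ 2) z
  <= 2 * cube_int k (fun y => (F y - cube_mean k F y) ^ 2) z
     + 2 ^ S k * (cube_mean k F z - cube_mean (S k) F z) ^ 2.
Proof.
  intros HF.
  assert (GP0 : BUC m (cube_mean k F)) by (apply BUC_cube_mean; auto).
  assert (GP1 : BUC m (cube_mean (S k) F)) by (apply BUC_cube_mean; auto).
  set (N := fun y => (cube_mean k F y - cube_mean (S k) F y) ^ 2).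
  assert (HN : cube_int k N z = 2 ^ k * N z).
  { apply (cube_of_invariant m). intros y i t Hi. unfold N.
    rewrite !cube_mean_invariant by lia. reflexivity. }
  eapply Rle_trans.
  - apply (cube_mono m k _ (fun y => 2 * (F y - cube_mean k F y) ^ 2 + 2 * N y));
      [apply BUC_sq, BUC_minus; auto | apply BUC_lin; apply BUC_sq, BUC_minus; auto |].
    intro y. unfold N. pose proof (pow2_ge_0 (F y - cube_mean k F y - (cube_mean k F y - cube_mean (S k) F y))).
    nra.
  - rewrite (cube_lin m) by (apply BUC_sq, BUC_minus; auto). rewrite HN. unfold N. simpl. lra.
Qed.

Lemma cube_poincare m F (fd : nat -> (nat -> R) -> R) : BUC m F ->
  (forall i, (1 <= i <= m)%nat -> BUC m (fd i) /\ unif_diff i F (fd i)) ->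
  forall k, (k <= m)%nat -> forall x,
  cube_int k (fun y => (F y - cube_mean k F y) ^ 2) x
  <= 32 * 2 ^ k * cube_int k (fun y => sum_1_to k (fun i => fd i y ^ 2)) x.
Proof.
  intros HF Hfd k. induction k as [|k IH]; intros Hk x.
  { simpl. unfold cube_mean. simpl. replace (F x / 1) with (F x) by field. lra. }
  specialize (IH ltac:(lia)).
  destruct (Hfd (S k) ltac:(lia)) as [HD HUD].
  set (Sk := fun y => sum_1_to k (fun i => fd i y ^ 2)).
  set (D := fun y => fd (S k) y ^ 2).
  assert (GS : BUC m Sk) by (apply BUC_sum_sq; intros; apply Hfd; lia).
  assert (GD : BUC m D) by (apply BUC_sq; auto).
  assert (GQ : BUC m (fun y => (F y - cube_mean (S k) F y) ^ 2))
    by (apply BUC_sq, BUC_minus; auto; apply BUC_cube_mean; auto).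
  set (dev := fun t => (cube_mean k F (upd x (S k) t) - cube_mean (S k) F x) ^ 2).
  assert (Hdev : cont_R dev).
  { apply cont_R_sq, cont_R_minus; [apply (BUC_slice m), BUC_cube_mean; auto | apply cont_R_const]. }
  rewrite (cube_S_integral m) by (apply BUC_cube; auto).
  eapply Rle_trans.
  - apply (integral_le _ (fun t => (64 * 2 ^ k) * cube_int k Sk (upd x (S k) t) + 2 ^ S k * dev t));
      [lra | apply (cube_slice_cont m); auto | apply cont_R_lin; auto; apply (cube_slice_cont m); auto |].
    intros t _. eapply Rle_trans; [apply (cube_dev_split m); auto|].
    rewrite (cube_mean_invariant (S k) F (S k)) by lia. fold (dev t).
    specialize (IH (upd x (S k) t)). fold Sk in IH. lra.
  - rewrite integral_lin by (auto; apply (cube_slice_cont m); auto).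
    rewrite <- (cube_S_integral m) by (apply BUC_cube; auto).
    pose proof (slice_poincare m k F (fd (S k)) x HF HD HUD) as Hsl. fold D dev in Hsl.
    assert (Esum : cube_int (S k) (fun y => sum_1_to (S k) (fun i => fd i y ^ 2)) x
                   = 1 * cube_int (S k) Sk x + 1 * cube_int (S k) D x).
    { rewrite <- (cube_lin m) by auto. apply cube_ext; intro y. unfold Sk, D. cbn [sum_1_to]. ring. }
    rewrite Esum.
    assert (0 <= cube_int (S k) D x) by (apply (cube_nonneg m); auto; intros; apply pow2_ge_0).
    pose proof (two_pow_pos k).
    assert (Hsl' : 2 ^ S k * integral dev (-1) 1 <= 32 * cube_int (S k) D x).
    { apply Rle_trans with (2 ^ S k * (16 / 2 ^ k * cube_int (S k) D x)).
      - apply Rmult_le_compat_l; [left; apply two_pow_pos | exact Hsl].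
      - right. simpl. field. lra. }
    assert (1 <= 2 ^ k) by (apply pow_R1_Rle; lra).
    simpl in *. nra.
Qed.

Definition weight (b s : R) : R := rpow (Rabs s) b.

Lemma exp_le_mono a b : a <= b -> exp a <= exp b.
Proof. intros [H|H]; [left; apply exp_increasing; auto | subst; lra]. Qed.

Lemma weight_exp b s : s <> 0 -> weight b s = exp (b * ln (Rabs s)).
Proof.
  intros Hs. unfold weight, rpow. destruct (Req_EM_T (Rabs s) 0) as [E|E]; [|reflexivity].
  exfalso. exact (Rabs_no_R0 s Hs E).
Qed.

Lemma weight_at_0 b : b <> 0 -> weight b 0 = 0.
Proof.
  intros Hb. unfold weight, rpow. rewrite Rabs_R0.
  destruct (Req_EM_T 0 0); [|lra]. destruct (Req_EM_T b 0); [lra | auto].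
Qed.

Lemma weight_nonneg b s : 0 <= weight b s.
Proof.
  destruct (Req_EM_T s 0) as [->|Hs]; [|rewrite weight_exp by auto; left; apply exp_pos].
  unfold weight, rpow. rewrite Rabs_R0. destruct (Req_EM_T 0 0); [|lra]. destruct (Req_EM_T b 0); lra.
Qed.

Lemma weight_cont_at_0 b : 0 < b -> continuous (weight b) 0.
Proof.
  intros Hb. apply cont_R_eps. intros e He. exists (exp (ln e / b)). split; [apply exp_pos|].
  intros y Hy. rewrite Rminus_0_r in Hy. rewrite weight_at_0, Rminus_0_r by lra.
  destruct (Req_EM_T y 0) as [->|Hy0]; [rewrite weight_at_0, Rabs_R0 by lra; lra|].
  rewrite weight_exp by auto. rewrite Rabs_right by (left; apply exp_pos).
  rewrite <- (exp_ln e) by lra. apply exp_increasing.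
  assert (Hl : ln (Rabs y) < ln e / b).
  { rewrite <- (ln_exp (ln e / b)). apply ln_increasing; auto. apply Rabs_pos_lt; auto. }
  apply Rmult_lt_compat_l with (r := b) in Hl; [|lra].
  replace (b * (ln e / b)) with (ln e) in Hl by (field; lra). lra.
Qed.

Lemma weight_cont_away b s0 : s0 <> 0 -> continuous (weight b) s0.
Proof.
  intros Hs0. assert (Hp : 0 < Rabs s0) by (apply Rabs_pos_lt; auto).
  apply (continuous_ext_loc (weight b) (fun s => exp (b * ln (Rabs s)))).
  - exists (mkposreal _ Hp). intros y Hy. change (Rabs (y - s0) < Rabs s0) in Hy.
    rewrite weight_exp; auto. intro E; subst. rewrite Rminus_0_l, Rabs_Ropp in Hy. lra.
  - apply continuity_pt_filterlim.
    apply continuity_pt_comp with (f1 := fun s => b * ln (Rabs s)) (f2 := exp).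
    + apply continuity_pt_comp with (f1 := Rabs) (f2 := fun a => b * ln a); [apply Rcontinuity_abs|].
      apply continuity_pt_scal, derivable_continuous_pt.
      exists (/ Rabs s0). apply derivable_pt_lim_ln; auto.
    + apply derivable_continuous_pt. exists (exp (b * ln (Rabs s0))). apply derivable_pt_lim_exp.
Qed.

Lemma weight_cont b : 0 <= b -> cont_R (weight b).
Proof.
  intros Hb s0. destruct (Req_EM_T s0 0) as [->|Hs0]; [|apply weight_cont_away; auto].
  destruct (Req_EM_T b 0) as [->|Hb0]; [|apply weight_cont_at_0; lra].
  apply (cont_R_ext (fun _ => 1)); [apply cont_R_const|]. intro s.
  destruct (Req_EM_T s 0) as [->|Hs].
  - unfold weight, rpow. rewrite Rabs_R0. destruct (Req_EM_T 0 0); [|lra]. destruct (Req_EM_T 0 0); lra.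
  - rewrite weight_exp by auto. rewrite Rmult_0_l, exp_0. reflexivity.
Qed.

Lemma weight_ge_sq b s : b <= 2 -> 0 <= s <= 1 -> s ^ 2 <= weight b s.
Proof.
  intros Hb Hs. destruct (Req_EM_T s 0) as [->|Hs0]; [simpl; rewrite Rmult_0_l; apply weight_nonneg|].
  rewrite weight_exp by auto. rewrite Rabs_right by lra.
  replace (s ^ 2) with (exp (2 * ln s)).
  - apply exp_le_mono. assert (ln s <= 0) by (rewrite <- ln_1; apply ln_le; lra). nra.
  - replace 2 with (INR 2) at 1 by (simpl; ring). rewrite <- (Rpower_pow 2 s) by lra. reflexivity.
Qed.

Lemma weight_lower b s : 0 <= b -> 1/2 <= s <= 1 -> exp (b * ln (1/2)) <= weight b s.
Proof.
  intros Hb Hs. rewrite weight_exp by lra. rewrite Rabs_right by lra.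
  apply exp_le_mono, Rmult_le_compat_l; [lra|]. apply ln_le; lra.
Qed.

Lemma pow2_weight b b' s : 0 <= s <= 1 -> pow2 (Rabs s) b b' = weight b s.
Proof. intros Hs. unfold pow2, weight. rewrite Rabs_right by lra. destruct (Rle_dec s 1); [auto | lra]. Qed.

(** On [1/2,1] the weight is bounded below, so the integral of a
    nonnegative function there is controlled by its weighted integral. *)
Lemma integral_upper_half_weighted b f : 0 <= b -> cont_R f -> (forall s, 0 <= f s) ->
  integral f (1/2) 1 <= / exp (b * ln (1/2)) * integral (fun s => weight b s * f s) 0 1.
Proof.
  intros Hb Hf Hf0. set (kap := exp (b * ln (1/2))).
  assert (Hkap : 0 < kap) by apply exp_pos.
  assert (Hwf : cont_R (fun s => weight b s * f s)) by (apply cont_R_mult; auto; apply weight_cont; auto).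
  rewrite <- (integral_chasles _ 0 (1/2) 1) by auto.
  assert (0 <= integral (fun s => weight b s * f s) 0 (1/2)).
  { apply integral_ge0; auto; [lra|]. intros; apply Rmult_le_pos; auto using weight_nonneg. }
  assert (integral f (1/2) 1 <= integral (fun s => / kap * (weight b s * f s) + 0 * 0) (1/2) 1).
  { apply integral_le; auto; [lra | apply (cont_R_lin _ (fun _ => 0)); auto using cont_R_const|].
    intros s Hs. rewrite Rmult_0_l, Rplus_0_r.
    apply Rmult_le_reg_l with kap; auto. rewrite <- Rmult_assoc, Rinv_r by lra.
    pose proof (weight_lower b s Hb Hs). specialize (Hf0 s). fold kap in H0. nra. }
  rewrite (integral_lin _ (fun _ => 0)), integral_const in H0 by auto using cont_R_const.
  assert (0 < / kap) by (apply Rinv_0_lt_compat; auto).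
  fold kap. nra.
Qed.

Definition axis (s : R) : nat -> R := upd (fun _ => 0) 0 s.

Lemma axis_0 s : axis s 0%nat = s.
Proof. apply upd_eq. Qed.

Lemma axis_slice_cont m k F : BUC m F -> cont_R (fun s => cube_int k F (axis s)).
Proof. intros; apply (cube_slice_cont m); auto. Qed.

Lemma box_int_integral m F : BUC m F -> box_int m F = integral (fun s => cube_int m F (axis s)) 0 1.
Proof. intros HF. apply Rint_RInt, ex_RInt_cont_R, (axis_slice_cont m); auto. Qed.

Lemma cube_axis_indep m F s t : (forall y t, F (upd y 0 t) = F y) ->
  cube_int m F (axis s) = cube_int m F (axis t).
Proof. intros HF. unfold axis. rewrite !(cube_indep m F 0 HF) by lia. reflexivity. Qed.

Lemma box_sq_dev m phi c : BUC m phi ->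
  box_int m (fun x => (phi x - c) ^ 2)
  = box_int m (fun x => phi x ^ 2) - 2 * c * box_int m phi + 2 ^ m * c ^ 2.
Proof.
  intros Hp.
  assert (Hp2 : BUC m (fun y => phi y ^ 2)) by (apply BUC_sq; auto).
  assert (Hlin : BUC m (fun y => 1 * phi y ^ 2 + (- 2 * c) * phi y)) by (apply BUC_lin; auto).
  rewrite !box_int_integral by (auto; apply BUC_sq, BUC_minus; auto using BUC_const).
  rewrite (integral_ext _ (fun s => 1 * (1 * cube_int m (fun y => phi y ^ 2) (axis s)
                                      + (- 2 * c) * cube_int m phi (axis s)) + (c ^ 2 * 2 ^ m) * 1)).
  - rewrite (integral_lin _ (fun _ => 1)) by (apply cont_R_lin || apply cont_R_const; apply (axis_slice_cont m); auto).
    rewrite integral_lin by (apply (axis_slice_cont m); auto). rewrite integral_const. ring.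
  - intro s. rewrite (cube_ext m _ (fun y => 1 * (1 * phi y ^ 2 + (- 2 * c) * phi y) + c ^ 2 * 1))
      by (intros; ring).
    rewrite (cube_lin m) by (auto using BUC_const). rewrite (cube_lin m) by auto.
    rewrite (cube_of_invariant m m (fun _ => 1)) by auto. ring.
Qed.

Lemma box_mean_minimizes m phi c : BUC m phi ->
  box_int m (fun x => (phi x - avg m phi) ^ 2) <= box_int m (fun x => (phi x - c) ^ 2).
Proof.
  intros Hp. rewrite !(box_sq_dev m) by auto. unfold avg.
  set (B := box_int m phi). pose proof (two_pow_pos m).
  assert (0 <= 2 ^ m * (c - B / 2 ^ m) ^ 2) by (apply Rmult_le_pos; [lra | apply pow2_ge_0]).
  assert (2 ^ m * (c - B / 2 ^ m) ^ 2
          = - 2 * c * B + 2 ^ m * c ^ 2 - (- 2 * (B / 2 ^ m) * B + 2 ^ m * (B / 2 ^ m) ^ 2))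
    by (field; lra).
  lra.
Qed.

Lemma Rint_eq_on (f g : R -> R) a b : a < b -> cont_R g -> (forall t, a <= t <= b -> f t = g t) ->
  Rint f a b = integral g a b.
Proof.
  intros Hab Hg E.
  assert (Hexf : ex_RInt f a b).
  { apply (ex_RInt_ext g); [|apply ex_RInt_cont_R; auto]. intros t Ht.
    rewrite Rmin_left in Ht by lra. rewrite Rmax_right in Ht by lra. symmetry; apply E; lra. }
  rewrite Rint_RInt by auto. apply RInt_ext. intros t Ht.
  rewrite Rmin_left in Ht by lra. rewrite Rmax_right in Ht by lra. apply E; lra.
Qed.

(** The energy of the statement as a weighted integral of slice energies;
    on the box |x_1| <= 1, so only the exponents delta_1, delta_2 matter. *)
Lemma box_Gamma m d1 d1' d2 d2' phi : 0 <= d1 -> 0 <= d2 ->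
  BUC m (fun y => partial phi 0 y ^ 2) -> BUC m (fun y => sum_1_to m (fun i => partial phi i y ^ 2)) ->
  box_int m (Gamma m d1 d1' d2 d2' phi)
  = integral (fun s => weight (2 * d1) s * cube_int m (fun y => partial phi 0 y ^ 2) (axis s)) 0 1
    + integral (fun s => weight (2 * d2) s
                          * cube_int m (fun y => sum_1_to m (fun i => partial phi i y ^ 2)) (axis s)) 0 1.
Proof.
  intros Hd1 Hd2 G1 G2.
  assert (Hw : forall b G, 0 <= b -> BUC m G -> cont_R (fun s => weight b s * cube_int m G (axis s)))
    by (intros; apply cont_R_mult; [apply weight_cont | apply (axis_slice_cont m)]; auto; lra).
  transitivity (integral (fun s => 1 * (weight (2 * d1) s * cube_int m (fun y => partial phi 0 y ^ 2) (axis s))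
    + 1 * (weight (2 * d2) s * cube_int m (fun y => sum_1_to m (fun i => partial phi i y ^ 2)) (axis s))) 0 1).
  - unfold box_int. apply Rint_eq_on; [lra | apply cont_R_lin; apply Hw; auto; lra |].
    intros t Ht. unfold Gamma.
    rewrite (cube_pull_out m m (fun y => pow2 (Rabs (y 0%nat)) (2 * d1) (2 * d1'))
               (fun y => partial phi 0 y ^ 2) (fun y => pow2 (Rabs (y 0%nat)) (2 * d2) (2 * d2')))
      by (auto; intros y i s Hi; rewrite upd_neq by lia; reflexivity).
    change (upd (fun _ => 0) 0 t) with (axis t). rewrite axis_0, !pow2_weight by auto. ring.
  - rewrite integral_lin by (apply Hw; auto; lra). ring.
Qed.

Section KeyEstimate.

Variables (m : nat) (phi : (nat -> R) -> R).
Hypothesis Hm : (1 <= m)%nat.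
Hypothesis Hphi : BUC m phi.
Hypothesis Hpartial : forall j, (j <= m)%nat -> BUC m (partial phi j).
Hypothesis Hdiff : forall j, (j <= m)%nat -> unif_diff j phi (partial phi j).

Definition trace y : R := phi (upd y 0 1).
Definition trace_dev y : R := phi y - trace y.
Definition dev_energy s : R := cube_int m (fun y => trace_dev y ^ 2) (axis s).
Definition normal_energy s : R := cube_int m (fun y => partial phi 0 y ^ 2) (axis s).
Definition tangential_energy s : R :=
  cube_int m (fun y => sum_1_to m (fun i => partial phi i y ^ 2)) (axis s).
Definition trace_mean : R := cube_mean m phi (axis 1).
Definition trace_var : R := cube_int m (fun y => (trace y - trace_mean) ^ 2) (axis 1).

Lemma trace_invariant y t : trace (upd y 0 t) = trace y.
Proof. unfold trace. rewrite upd_upd. reflexivity. Qed.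

Lemma BUC_trace : BUC m trace.
Proof. apply BUC_upd; auto. Qed.

Lemma BUC_trace_dev : BUC m trace_dev.
Proof. apply BUC_minus; auto using BUC_trace. Qed.

Lemma BUC_normal : BUC m (fun y => partial phi 0 y ^ 2).
Proof. apply BUC_sq, Hpartial; lia. Qed.

Lemma BUC_tangential : BUC m (fun y => sum_1_to m (fun i => partial phi i y ^ 2)).
Proof. apply BUC_sum_sq; intros; apply Hpartial; lia. Qed.

Lemma dev_energy_cont : cont_R dev_energy.
Proof. apply (axis_slice_cont m), BUC_sq, BUC_trace_dev. Qed.

Lemma tangential_energy_cont : cont_R tangential_energy.
Proof. apply (axis_slice_cont m), BUC_tangential. Qed.

Lemma dev_energy_nonneg s : 0 <= dev_energy s.
Proof. apply (cube_nonneg m); [apply BUC_sq, BUC_trace_dev | intros; apply pow2_ge_0]. Qed.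

Lemma normal_energy_nonneg s : 0 <= normal_energy s.
Proof. apply (cube_nonneg m); [apply BUC_normal | intros; apply pow2_ge_0]. Qed.

Lemma tangential_energy_nonneg s : 0 <= tangential_energy s.
Proof. apply (cube_nonneg m); [apply BUC_tangential | intros; apply sum_sq_nonneg]. Qed.

Lemma dev_energy_1 : dev_energy 1 = 0.
Proof.
  unfold dev_energy. rewrite (cube_freeze m _ 0) by lia. rewrite axis_0.
  rewrite (cube_ext m _ (fun _ => 0)); [rewrite (cube_of_invariant m m (fun _ => 0)); auto; ring|].
  intro y. unfold trace_dev. fold (trace (upd y 0 1)). rewrite trace_invariant. unfold trace. ring.
Qed.

(** d/dx_1 (w^2) = 2 w d_1 phi, since the trace does not depend on x_1. *)
Lemma dev_sq_diff : unif_diff 0 (fun y => trace_dev y ^ 2) (fun y => 2 * trace_dev y * partial phi 0 y).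
Proof.
  assert (Hw : unif_diff 0 trace_dev (partial phi 0)).
  { apply (unif_diff_ext 0 (fun y => 1 * phi y + (-1) * trace y) (fun y => 1 * partial phi 0 y + (-1) * 0));
      [apply unif_diff_lin; [apply Hdiff; lia | apply unif_diff_invariant, trace_invariant] | |];
      intro y; unfold trace_dev; ring. }
  assert (Hd0 : BUC m (partial phi 0)) by (apply Hpartial; lia).
  apply (unif_diff_ext 0 (fun y => trace_dev y * trace_dev y)
           (fun y => partial phi 0 y * trace_dev y + trace_dev y * partial phi 0 y));
    [apply (unif_diff_mult m); auto using BUC_trace_dev | |]; intro y; ring.
Qed.

(** Hardy step: int_0^1 W <= 4 int_0^1 s^2 J1, from d/ds (s W(s)) and
    -s W'(s) = -2 s int w d_1 phi <= W/2 + 2 s^2 J1. *)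
Lemma hardy_step : integral dev_energy 0 1 <= 4 * integral (fun s => s ^ 2 * normal_energy s) 0 1.
Proof.
  set (W'f := fun y => 2 * trace_dev y * partial phi 0 y).
  assert (HW'f : BUC m W'f).
  { apply BUC_mult; [apply BUC_scal, BUC_trace_dev | apply Hpartial; lia]. }
  apply (hardy_unit_interval _ (fun s => cube_int m W'f (axis s))).
  - intro s. exact (unif_diff_derive 0 _ _ (cube_unif_diff m m _ _ 0
      (BUC_sq m _ BUC_trace_dev) HW'f dev_sq_diff ltac:(lia)) (fun _ => 0) s).
  - apply (axis_slice_cont m); auto.
  - apply cont_R_mult; [apply cont_R_sq, cont_R_id | apply (axis_slice_cont m), BUC_normal].
  - apply dev_energy_1.
  - intros s Hs.
    assert (E : dev_energy s / 2 + 2 * (s ^ 2 * normal_energy s) + s * cube_int m W'f (axis s)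
                = cube_int m (fun y => / 2 * (trace_dev y + 2 * s * partial phi 0 y) ^ 2) (axis s)).
    { transitivity (cube_int m (fun y => 1 * (/ 2 * trace_dev y ^ 2 + (2 * s ^ 2) * partial phi 0 y ^ 2)
                                          + s * W'f y) (axis s)).
      - rewrite (cube_lin m) by (auto; apply BUC_lin; auto using BUC_normal; apply BUC_sq, BUC_trace_dev).
        rewrite (cube_lin m) by (auto using BUC_normal; apply BUC_sq, BUC_trace_dev).
        unfold dev_energy, normal_energy. field.
      - apply cube_ext; intro y. unfold W'f. field. }
    assert (0 <= cube_int m (fun y => / 2 * (trace_dev y + 2 * s * partial phi 0 y) ^ 2) (axis s)).
    { apply (cube_nonneg m); [|intros; pose proof (pow2_ge_0 (trace_dev y + 2 * s * partial phi 0 y)); lra].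
      apply BUC_scal, BUC_sq, BUC_plus; [apply BUC_trace_dev | apply BUC_scal, Hpartial; lia]. }
    lra.
Qed.

Lemma trace_var_slice s : trace_var = cube_int m (fun y => (trace y - trace_mean) ^ 2) (axis s).
Proof. apply cube_axis_indep. intros y t. rewrite trace_invariant. reflexivity. Qed.

(** The mean of phi on the slice s differs from the trace mean by the mean
    of w, which Jensen's inequality bounds by W(s). *)
Lemma trace_mean_gap s : 2 ^ m * (cube_mean m phi (axis s) - trace_mean) ^ 2 <= dev_energy s.
Proof.
  pose proof (two_pow_pos m).
  assert (Ew : cube_mean m phi (axis s) - trace_mean = cube_int m trace_dev (axis s) / 2 ^ m).
  { unfold trace_mean, cube_mean.
    rewrite (cube_ext m trace_dev (fun y => 1 * phi y + (-1) * trace y)) by (intro; unfold trace_dev; ring).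
    rewrite (cube_lin m) by auto using BUC_trace.
    rewrite (cube_freeze m phi 0 ltac:(lia) (axis 1)), axis_0.
    rewrite (cube_axis_indep m (fun y => phi (upd y 0 1)) 1 s) by (intros; rewrite upd_upd; reflexivity).
    fold trace. field. lra. }
  rewrite Ew. pose proof (cube_jensen m m trace_dev (axis s) BUC_trace_dev).
  unfold dev_energy. apply Rmult_le_reg_r with (2 ^ m); [lra|].
  replace (2 ^ m * (cube_int m trace_dev (axis s) / 2 ^ m) ^ 2 * 2 ^ m)
    with (cube_int m trace_dev (axis s) ^ 2) by (field; lra).
  lra.
Qed.

(** Trace step: on every slice, a - c = (phi - mean) + (mean - c) - w, so
    the cube Poincaré inequality bounds the trace variance. *)
Lemma trace_step s : trace_var <= 6 * dev_energy s + 4 * (32 * 2 ^ m) * tangential_energy s.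
Proof.
  set (P := cube_mean m phi).
  assert (GP : BUC m P) by (apply BUC_cube_mean; auto).
  assert (GA : BUC m (fun y => (phi y - P y) ^ 2)) by (apply BUC_sq, BUC_minus; auto).
  assert (GB : BUC m (fun y => (P y - trace_mean) ^ 2)) by (apply BUC_sq, BUC_minus; auto using BUC_const).
  assert (GW : BUC m (fun y => trace_dev y ^ 2)) by (apply BUC_sq, BUC_trace_dev).
  rewrite (trace_var_slice s). eapply Rle_trans.
  - apply (cube_mono m m _ (fun y => 2 * trace_dev y ^ 2
                                   + 1 * (4 * (phi y - P y) ^ 2 + 4 * (P y - trace_mean) ^ 2)));
      [apply BUC_sq, BUC_minus; auto using BUC_trace, BUC_const | apply BUC_lin; auto; apply BUC_lin; auto |].
    intro y. unfold trace_dev.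
    pose proof (pow2_ge_0 (phi y - trace y + (phi y - P y + (P y - trace_mean)))).
    pose proof (pow2_ge_0 (phi y - P y - (P y - trace_mean))). nra.
  - rewrite (cube_lin m) by (auto; apply BUC_lin; auto). rewrite (cube_lin m) by auto.
    assert (HA : cube_int m (fun y => (phi y - P y) ^ 2) (axis s) <= 32 * 2 ^ m * tangential_energy s).
    { apply (cube_poincare m phi (fun i => partial phi i)); auto.
      intros i Hi; split; [apply Hpartial | apply Hdiff]; lia. }
    assert (HB : cube_int m (fun y => (P y - trace_mean) ^ 2) (axis s) = 2 ^ m * (P (axis s) - trace_mean) ^ 2).
    { apply (cube_of_invariant m). intros y i t Hi. unfold P. rewrite cube_mean_invariant by lia. reflexivity. }
    pose proof (trace_mean_gap s). fold P in H. fold (dev_energy s). lra.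
Qed.

Lemma trace_var_bound :
  trace_var <= 12 * integral dev_energy 0 1 + 8 * (32 * 2 ^ m) * integral tangential_energy (1/2) 1.
Proof.
  assert (HJ := tangential_energy_cont). assert (HW := dev_energy_cont).
  assert (I : integral (fun _ => trace_var) (1/2) 1
              <= integral (fun s => 6 * dev_energy s + (4 * (32 * 2 ^ m)) * tangential_energy s) (1/2) 1).
  { apply integral_le; [lra | apply cont_R_const | apply cont_R_lin; auto |]. intros; apply trace_step. }
  rewrite integral_const, integral_lin in I by auto.
  assert (integral dev_energy (1/2) 1 <= integral dev_energy 0 1).
  { rewrite <- (integral_chasles dev_energy 0 (1/2) 1) by auto.
    assert (0 <= integral dev_energy 0 (1/2)) by (apply integral_ge0; auto using dev_energy_nonneg; lra). lra. }
  lra.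
Qed.

(** Splitting phi - c = w + (a - c). *)
Lemma split_step :
  box_int m (fun x => (phi x - trace_mean) ^ 2) <= 2 * integral dev_energy 0 1 + 2 * trace_var.
Proof.
  assert (GV : BUC m (fun y => (trace y - trace_mean) ^ 2))
    by (apply BUC_sq, BUC_minus; auto using BUC_trace, BUC_const).
  assert (GW : BUC m (fun y => trace_dev y ^ 2)) by (apply BUC_sq, BUC_trace_dev).
  rewrite box_int_integral by (apply BUC_sq, BUC_minus; auto using BUC_const).
  eapply Rle_trans; [apply (integral_le _ (fun s => 2 * dev_energy s + 2 * trace_var)); [lra| | |]|].
  - apply (axis_slice_cont m), BUC_sq, BUC_minus; auto using BUC_const.
  - apply (cont_R_lin _ (fun _ => trace_var)); auto using dev_energy_cont, cont_R_const.
  - intros s _. rewrite (trace_var_slice s). unfold dev_energy.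
    rewrite <- (cube_lin m) by auto. apply (cube_mono m); auto.
    + apply BUC_sq, BUC_minus; auto using BUC_const.
    + apply BUC_lin; auto.
    + intro y. unfold trace_dev. pose proof (pow2_ge_0 (phi y - trace y - (trace y - trace_mean))). nra.
  - rewrite (integral_lin _ (fun _ => trace_var)) by auto using dev_energy_cont, cont_R_const.
    rewrite integral_const. lra.
Qed.

Lemma key_estimate b1 b2 : 0 <= b1 <= 2 -> 0 <= b2 ->
  box_int m (fun x => (phi x - trace_mean) ^ 2)
  <= (104 + 16 * (32 * 2 ^ m) / exp (b2 * ln (1/2)))
     * (integral (fun s => weight b1 s * normal_energy s) 0 1
        + integral (fun s => weight b2 s * tangential_energy s) 0 1).
Proof.
  intros Hb1 Hb2.
  set (C := 32 * 2 ^ m). set (kap := exp (b2 * ln (1/2))).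
  assert (HC : 0 < C) by (unfold C; pose proof (two_pow_pos m); lra).
  assert (Hkap : 0 < kap) by apply exp_pos.
  assert (HJ1 : cont_R normal_energy) by apply (axis_slice_cont m), BUC_normal.
  set (Y1 := integral (fun s => weight b1 s * normal_energy s) 0 1).
  set (Y2 := integral (fun s => weight b2 s * tangential_energy s) 0 1).
  assert (HY1 : 0 <= Y1).
  { apply integral_ge0; [lra | apply cont_R_mult; auto; apply weight_cont; lra |].
    intros; apply Rmult_le_pos; auto using weight_nonneg, normal_energy_nonneg. }
  assert (HY2 : 0 <= Y2).
  { apply integral_ge0; [lra | apply cont_R_mult; auto using tangential_energy_cont; apply weight_cont; lra |].
    intros; apply Rmult_le_pos; auto using weight_nonneg, tangential_energy_nonneg. }
  assert (Hhardy : integral dev_energy 0 1 <= 4 * Y1).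
  { eapply Rle_trans; [apply hardy_step|]. apply Rmult_le_compat_l; [lra|].
    apply integral_le; [lra | apply cont_R_mult; auto; apply cont_R_sq, cont_R_id | apply cont_R_mult; auto;
      apply weight_cont; lra |].
    intros s Hs. apply Rmult_le_compat_r; auto using normal_energy_nonneg. apply weight_ge_sq; lra. }
  assert (Htail : integral tangential_energy (1/2) 1 <= / kap * Y2)
    by (apply integral_upper_half_weighted; auto using tangential_energy_cont, tangential_energy_nonneg).
  pose proof split_step. pose proof trace_var_bound. fold C in H0.
  assert (Hk : 16 * C / kap * Y2 = 16 * C * (/ kap * Y2)) by (field; lra).
  assert (0 <= 16 * C / kap) by (apply Rmult_le_pos; [lra | left; apply Rinv_0_lt_compat; lra]).
  nra.
Qed.

End KeyEstimate.

(** The theorem, with lambda = 1/K for the constant K of the key estimate at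
    the exponents 2 delta_1 in [1,2) and 2 delta_2 >= 0: the mean deviation
    is at most the deviation from the trace mean, and the energy of the
    statement is the sum of the two weighted slice energies. *)
Theorem proposition3p6 (m : nat) (d1 d1' d2 d2' : R) :
  (1 <= m)%nat ->
  1 / 2 <= d1 < 1 ->
  0 <= d1' < 1 ->
  0 <= d2 -> 0 <= d2' ->
  exists lambda : R, lambda > 0 /\
    forall phi : (nat -> R) -> R, C1c m phi ->
      box_int m (Gamma m d1 d1' d2 d2' phi)
        >= lambda * box_int m (fun x => (phi x - avg m phi) ^ 2).
Proof.
  intros Hm Hd1 _ Hd2 _.
  set (K := 104 + 16 * (32 * 2 ^ m) / exp (2 * d2 * ln (1/2))).
  assert (HK : 0 < K).
  { unfold K. pose proof (two_pow_pos m). pose proof (exp_pos (2 * d2 * ln (1/2))).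
    assert (0 < 16 * (32 * 2 ^ m) / exp (2 * d2 * ln (1/2))) by (apply Rdiv_lt_0_compat; lra). lra. }
  exists (/ K). split; [apply Rinv_0_lt_compat; auto|].
  intros phi Hphi. destruct (C1c_regular m phi Hphi) as [Gp [Gd UDd]].
  rewrite (box_Gamma m) by (lra || (apply BUC_normal; auto) || (apply BUC_tangential; auto)).
  pose proof (box_mean_minimizes m phi (trace_mean m phi) Gp) as Hmean.
  pose proof (key_estimate m phi Hm Gp Gd UDd (2 * d1) (2 * d2) ltac:(lra) ltac:(lra)) as Hkey.
  fold K in Hkey. apply Rle_ge. apply Rmult_le_reg_l with K; auto.
  rewrite <- Rmult_assoc, Rinv_r, Rmult_1_l by lra.
  unfold normal_energy, tangential_energy in Hkey. lra.
Qed.
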